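(* For any integers $W\ge6$, $L\ge2$, $s\in\mathbb{N}$ and any $\xi_i\in[0,1]$ for $i=0,1,\dots,W^2L^2-1$, there exists a ReLU network $\phi:\mathbb{R}\to\mathbb{R}$ with $$\phi\in\mathcal{NN}\big(8s(2W+1)\lceil\log_2(2W)\rceil+2,\ 4L\lceil\log_2(2L)\rceil+1\big)$$ such that $\mathrm{Lip}\,\phi\le4\cdot2^{L^2}+2L^2$, $|\phi(i)-\xi_i|\le(WL)^{-2s}$ for $i=0,1,\dots,W^2L^2-1$, and $\phi(t)\in[0,1]$ for all $t\in\mathbb{R}$.
   Context: $\sigma(x)=\max(x,0)$. $\mathcal{NN}(W,L)$: functions $\phi(x)=T_L(\sigma(T_{L-1}(\cdots\sigma(T_0(x))\cdots)))$ with affine maps $T_l$, ReLU componentwise, all hidden layer sizes $\le W$ and depth $\le L$. $\mathrm{Lip}\,\phi$ is the Lipschitz constant of $\phi$. *)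

From Stdlib Require Import Reals Lra Lia List Arith.
Import ListNotations.
Open Scope R_scope.

Definition relu (x : R) : R := Rmax x 0.

Fixpoint sumR (n : nat) (f : nat -> R) : R :=
  match n with
  | O => 0
  | S k => sumR k f + f k
  end.

(* An affine map R^a_in -> R^a_out, x |-> A x + b; vectors are nat -> R
   (only indices below the dimension matter). *)
Record affine := mkAffine {
  a_in : nat;
  a_out : nat;
  a_mat : nat -> nat -> R;   (* a_mat i j : row i < a_out, column j < a_in *)
  a_bias : nat -> R
}.

Definition eval_affine (T : affine) (x : nat -> R) : nat -> R :=
  fun i => sumR (a_in T) (fun j => a_mat T i j * x j) + a_bias T i.

Fixpoint eval_net (Ts : list affine) (x : nat -> R) : nat -> R :=
  match Ts with
  | [] => x
  | [T] => eval_affine T x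
  | T :: Ts' => eval_net Ts' (fun i => relu (eval_affine T x i))
  end.

Fixpoint chain_ok (d : nat) (Ts : list affine) : Prop :=
  match Ts with
  | [] => d = 1%nat
  | T :: Ts' => a_in T = d /\ chain_ok (a_out T) Ts'
  end.

Fixpoint hidden_le (W : nat) (Ts : list affine) : Prop :=
  match Ts with
  | [] => True
  | [T] => True
  | T :: Ts' => (a_out T <= W)%nat /\ hidden_le W Ts'
  end.

Definition realize (Ts : list affine) (t : R) : R :=
  eval_net Ts (fun _ => t) 0%nat.

(* NN(W,L): ReLU networks R -> R with L' <= L hidden layers
   (L'+1 affine maps), all hidden layer sizes <= W. *)
Definition NN (W L : nat) (phi : R -> R) : Prop :=
  exists Ts : list affine,
    Ts <> [] /\ chain_ok 1 Ts /\ hidden_le W Ts /\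
    (length Ts <= S L)%nat /\
    forall t, phi t = realize Ts t.

Definition lip_le (phi : R -> R) (c : R) : Prop :=
  forall x y, Rabs (phi x - phi y) <= c * Rabs (x - y).

From Stdlib Require Import Reals Lra Lia List Arith ZArith.
Import ListNotations.
Open Scope R_scope.

(* Write each target [xi i] with [P] binary digits; the network is [clamp 1]
   of a weighted sum over the digit positions [m] of units [g_m] such that
   [g_m i] is the [m]-th digit of [xi i].  A unit cuts the indices into [M]
   segments of length [K].  A triangle wave of period [K] folds [t = r K + j]
   onto a position [j'] common to all segments ([j] or [K - 1 - j]); a
   2-Lipschitz piecewise linear map sends [j'] to the number whose ternary
   digits, all 0 or 2, are the bits at position [j'] of the [M] segments; and
   [r] steps of the shift [x |-> 3x - 2 digit(x)] followed by a ramp read off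
   digit [r], which ramps in [t] select.  Since the digits avoid 1, the shift
   is 3-Lipschitz where it matters, so a unit is 3^(M+1)-Lipschitz on every
   unit interval, hence everywhere.  The 2-Lipschitz map costs only O(N)
   neurons per layer for N^2 points: in an N x N grid a zigzag in [t] gives
   the column and N piecewise linear functions of [t] give the row's values. *)

(** * Sums, ReLU and clipping *)

Lemma sumR_ext n f g : (forall i, (i < n)%nat -> f i = g i) -> sumR n f = sumR n g.
Proof. induction n; simpl; intros H; [reflexivity|]. rewrite IHn by (intros; apply H; lia). rewrite H by lia. reflexivity. Qed.

Lemma sumR_plus n f g : sumR n (fun i => f i + g i) = sumR n f + sumR n g.
Proof. induction n; simpl; [lra|]. rewrite IHn. lra. Qed.

Lemma sumR_minus n f g : sumR n (fun i => f i - g i) = sumR n f - sumR n g.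
Proof. induction n; simpl; [lra|]. rewrite IHn. lra. Qed.

Lemma sumR_scal n c f : sumR n (fun i => c * f i) = c * sumR n f.
Proof. induction n; simpl; [lra|]. rewrite IHn. lra. Qed.

Lemma sumR_zero n f : (forall i, (i < n)%nat -> f i = 0) -> sumR n f = 0.
Proof. intros H. rewrite (sumR_ext n f (fun _ => 0)) by auto. induction n; simpl; [lra|]. rewrite IHn by (intros; apply H; lia). lra. Qed.

Lemma sumR_const n c : sumR n (fun _ => c) = INR n * c.
Proof. induction n; simpl sumR; [simpl; lra|]. rewrite IHn, S_INR. lra. Qed.

Lemma sumR_shift n f : sumR (S n) f = f 0%nat + sumR n (fun i => f (S i)).
Proof. induction n; simpl in *; [lra|]. rewrite IHn. lra. Qed.

Lemma sumR_add a b f : sumR (a + b) f = sumR a f + sumR b (fun i => f (a + i)%nat).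
Proof. induction b; simpl. rewrite Nat.add_0_r; lra. rewrite Nat.add_succ_r. simpl. rewrite IHb. lra. Qed.

Lemma sumR_mul a b f : sumR (a * b) f = sumR a (fun c => sumR b (fun o => f (c * b + o)%nat)).
Proof. induction a; simpl; [lra|]. rewrite Nat.add_comm, sumR_add, IHa. lra. Qed.

Lemma sumR_split3 a b f : sumR (a + S b) f = sumR a f + f a + sumR b (fun i => f (a + S i)%nat).
Proof. rewrite sumR_add, sumR_shift, Nat.add_0_r. lra. Qed.

Lemma sumR_le n f g : (forall i, (i < n)%nat -> f i <= g i) -> sumR n f <= sumR n g.
Proof. induction n as [|n IHn]; simpl; intros H; [lra|]. specialize (IHn (fun i Hi => H i ltac:(lia))). specialize (H n ltac:(lia)). lra. Qed.

Lemma sumR_nonneg n f : (forall i, (i < n)%nat -> 0 <= f i) -> 0 <= sumR n f.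
Proof. intros H. pose proof (sumR_le n (fun _ => 0) f H). rewrite sumR_const in H0. lra. Qed.

Lemma sumR_abs n f : Rabs (sumR n f) <= sumR n (fun i => Rabs (f i)).
Proof. induction n; simpl. rewrite Rabs_R0; lra. eapply Rle_trans; [apply Rabs_triang|]. lra. Qed.

Lemma sumR_prefix_at n a A X F : (a < n)%nat ->
  (forall k, (k < a)%nat -> F k = A k) -> F a = X ->
  (forall k, (a < k < n)%nat -> F k = 0) ->
  sumR n F = sumR a A + X.
Proof.
  intros Ha H1 H2 H3. replace n with (a + S (n - a - 1))%nat by lia.
  rewrite sumR_split3. rewrite (sumR_ext a F A) by auto. rewrite H2.
  rewrite (sumR_zero (n - a - 1) (fun i => F (a + S i)%nat)); [lra|]. intros i Hi. apply H3. lia.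
Qed.

Lemma sumR_prefix n a A F : (a <= n)%nat -> (forall k, (k < a)%nat -> F k = A k) ->
  (forall k, (a <= k < n)%nat -> F k = 0) -> sumR n F = sumR a A.
Proof.
  intros Ha H1 H2. replace n with (a + (n - a))%nat by lia. rewrite sumR_add.
  rewrite (sumR_ext a F A) by auto. rewrite (sumR_zero (n - a) (fun i => F (a + i)%nat)); [lra|].
  intros; apply H2; lia.
Qed.

Lemma sumR_telescope a (h : nat -> R) : sumR a (fun m => h (S m) - h m) = h a - h 0%nat.
Proof. induction a; simpl; [lra|]. rewrite IHa. lra. Qed.

Lemma sumR_last n f : (1 <= n)%nat -> sumR n f = sumR (n - 1) f + f (n - 1)%nat.
Proof. intros. destruct n; [lia|]. simpl. replace (n - 0)%nat with n by lia. reflexivity. Qed.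

Lemma sumR_single n k a : (k < n)%nat -> sumR n (fun i => if Nat.eqb i k then a else 0) = a.
Proof. induction n as [|n IHn]; intros H; [lia|]. simpl. destruct (Nat.eqb n k) eqn:E.
 - apply Nat.eqb_eq in E; subst k. rewrite sumR_zero; [lra|]. intros i Hi. destruct (Nat.eqb_spec i n); [lia|auto].
 - apply Nat.eqb_neq in E. rewrite IHn by lia. lra. Qed.

Lemma sumR_single_le n k a : 0 <= a -> sumR n (fun i => if Nat.eqb i k then a else 0) <= a.
Proof. intros Ha. destruct (Nat.lt_ge_cases k n) as [Hk|Hk]. rewrite sumR_single by exact Hk; lra.
 rewrite sumR_zero; [lra|]. intros i Hi. destruct (Nat.eqb_spec i k); [lia|auto]. Qed.

Lemma sumR_pow2 n : sumR n (fun i => 2 ^ i) = 2 ^ n - 1.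
Proof. induction n; simpl; [lra|]. rewrite IHn. lra. Qed.

Lemma sumR_pow3 n : sumR n (fun i => 2 * 3 ^ (S i)) = 3 ^ (S n) - 3.
Proof. induction n as [|n IHn]; [simpl; lra|]. cbn [sumR]. rewrite IHn. simpl. lra. Qed.

Lemma INR_lt_S m n : (m < n)%nat -> INR m + 1 <= INR n.
Proof. intros H. rewrite <- S_INR. apply le_INR. exact H. Qed.

Lemma relu_pos x : 0 <= x -> relu x = x.
Proof. unfold relu, Rmax. destruct (Rle_dec x 0); lra. Qed.
Lemma relu_neg x : x <= 0 -> relu x = 0.
Proof. unfold relu, Rmax. destruct (Rle_dec x 0); lra. Qed.
Lemma relu_ge0 x : 0 <= relu x.
Proof. unfold relu, Rmax. destruct (Rle_dec x 0); lra. Qed.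
Lemma relu_id x : relu (relu x) = relu x.
Proof. apply relu_pos, relu_ge0. Qed.
Lemma relu_split x : relu x = x + relu (- x).
Proof. unfold relu, Rmax. destruct (Rle_dec x 0), (Rle_dec (-x) 0); lra. Qed.

Lemma relu_shift x c : 0 <= c -> relu (relu x - c) = relu (x - c).
Proof. intros. unfold relu, Rmax. repeat destruct Rle_dec; lra. Qed.

Ltac relu_cases :=
  repeat match goal with
  | |- context [relu ?x] =>
      let H := fresh in destruct (Rle_dec x 0) as [H|H];
      [rewrite (relu_neg x H) | rewrite (relu_pos x (Rlt_le _ _ (Rnot_le_lt _ _ H)))]
  end.

Definition clamp (A x : R) := relu x - relu (x - A).
Lemma clamp_lo A x : 0 <= A -> x <= 0 -> clamp A x = 0.
Proof. intros. unfold clamp. relu_cases; lra. Qed.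
Lemma clamp_hi A x : 0 <= A -> A <= x -> clamp A x = A.
Proof. intros. unfold clamp. relu_cases; lra. Qed.
Lemma clamp_mid A x : 0 <= x <= A -> clamp A x = x.
Proof. intros. unfold clamp. relu_cases; lra. Qed.
Lemma clamp_range A x : 0 <= A -> 0 <= clamp A x <= A.
Proof. intros. unfold clamp. relu_cases; lra. Qed.
Lemma clamp_lip A x y : 0 <= A -> Rabs (clamp A x - clamp A y) <= Rabs (x - y).
Proof. intros. unfold clamp. relu_cases; unfold Rabs; repeat destruct Rcase_abs; lra. Qed.
Lemma clamp_mono A x y : 0 <= A -> x <= y -> clamp A x <= clamp A y.
Proof. intros. unfold clamp. relu_cases; lra. Qed.

(** * Lipschitz bounds from unit cells *)

Lemma lip_of_ordered (f : R -> R) C :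
  (forall x y, x <= y -> Rabs (f y - f x) <= C * (y - x)) ->
  forall x y, Rabs (f x - f y) <= C * Rabs (x - y).
Proof.
  intros K x y. destruct (Rle_dec x y) as [H|H].
  - rewrite Rabs_minus_sym, (Rabs_left1 (x - y)) by lra. replace (- (x - y)) with (y - x) by ring. auto.
  - rewrite (Rabs_right (x - y)) by lra. apply K. lra.
Qed.

Definition lip_on_cells (f : R -> R) (C : R) :=
  forall n : nat, forall x y, INR n <= x <= INR n + 1 -> INR n <= y <= INR n + 1 ->
    Rabs (f x - f y) <= C * Rabs (x - y).

Lemma lip_on_cells_span f C : lip_on_cells f C ->
  forall k : nat, forall x y, 0 <= x <= y -> y <= INR k -> Rabs (f y - f x) <= C * (y - x).
Proof.
  intros Hc k. induction k as [|k IH]; intros x y Hxy Hy.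
  { simpl in Hy. replace y with x by lra. replace (f x - f x) with 0 by ring. rewrite Rabs_R0. lra. }
  assert (cell : forall u v, INR k <= u <= v -> v <= INR k + 1 -> Rabs (f v - f u) <= C * (v - u)).
  { intros u v Hu Hv. rewrite <- (Rabs_right (v - u)) by lra. apply (Hc k); lra. }
  rewrite S_INR in Hy. destruct (Rle_dec y (INR k)) as [Hyk|Hyk]; [apply IH; lra|].
  destruct (Rle_dec x (INR k)) as [Hxk|Hxk]; [|apply cell; lra].
  pose proof (IH x (INR k) ltac:(lra) ltac:(lra)). pose proof (cell (INR k) y ltac:(lra) ltac:(lra)).
  replace (f y - f x) with ((f y - f (INR k)) + (f (INR k) - f x)) by ring.
  eapply Rle_trans; [apply Rabs_triang|]. lra.
Qed.

Lemma lip_of_lip_on_cells f C : 0 <= C -> (forall x, x <= 0 -> f x = f 0) -> lip_on_cells f C ->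
  forall x y, Rabs (f x - f y) <= C * Rabs (x - y).
Proof.
  intros HC Hneg Hc. apply lip_of_ordered. intros x y Hxy.
  assert (span : forall u, 0 <= u <= y -> Rabs (f y - f u) <= C * (y - u)).
  { intros u Hu. destruct (archimed y) as [Ay _].
    apply (lip_on_cells_span f C Hc (Z.to_nat (up y))); [lra|].
    rewrite INR_IZR_INZ, Z2Nat.id; [lra|]. apply le_IZR. lra. }
  destruct (Rle_dec 0 x) as [Hx|Hx]; [apply span; lra|].
  rewrite (Hneg x) by lra. destruct (Rle_dec y 0) as [Hy|Hy].
  - rewrite (Hneg y Hy). replace (f 0 - f 0) with 0 by ring. rewrite Rabs_R0. nra.
  - pose proof (span 0 ltac:(lra)). nra.
Qed.

(** * Zigzag functions *)

Definition parity (a : nat) : R := if Nat.even a then 0 else 1.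

Lemma pow_m1_even a : Nat.even a = true -> (-1) ^ a = 1.
Proof. intros E. apply Nat.even_spec in E. destruct E as [k ->]. apply pow_1_even. Qed.
Lemma pow_m1_odd a : Nat.even a = false -> (-1) ^ a = -1.
Proof. intros E. assert (Nat.odd a = true) by (rewrite <- Nat.negb_even, E; reflexivity).
  apply Nat.odd_spec in H. destruct H as [k ->]. replace (2 * k + 1)%nat with (S (2 * k)) by lia. apply pow_1_odd. Qed.

Lemma sumR_sign a : sumR a (fun k => (-1) ^ k) = parity a.
Proof. induction a; simpl; [unfold parity; simpl; lra|]. rewrite IHa. unfold parity.
  rewrite Nat.even_succ, <- Nat.negb_even. destruct (Nat.even a) eqn:E; simpl.
  - rewrite pow_m1_even by exact E. lra.
  - rewrite pow_m1_odd by exact E. lra.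
Qed.

Lemma pow_m1_abs k : Rabs ((-1) ^ k) = 1.
Proof. rewrite <- RPow_abs. replace (Rabs (-1)) with 1 by (rewrite Rabs_left by lra; lra). apply pow1. Qed.

(* [zigzag P cnt] is a triangle wave: tooth [k] rises by [P - 1] on
   [[kP, kP + P - 1]] and is flat on the unit gap before [(k+1)P]; the
   alternating signs fold every tooth back onto [[0, P - 1]]. *)
Definition tooth (P : nat) (x : R) (k : nat) := clamp (INR P - 1) (x - INR k * INR P).
Definition zigzag (P cnt : nat) (x : R) := sumR cnt (fun k => (-1) ^ k * tooth P x k).
Definition staircase (P cnt : nat) (x : R) := sumR cnt (fun k => tooth P x k).

Lemma tooth_full P x k : (1 <= P)%nat -> INR k * INR P + INR P - 1 <= x -> tooth P x k = INR P - 1.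
Proof. intros HP H. unfold tooth. apply clamp_hi. apply (le_INR 1) in HP; simpl in HP; lra. lra. Qed.
Lemma tooth_zero P x k : (1 <= P)%nat -> x <= INR k * INR P -> tooth P x k = 0.
Proof. intros HP H. unfold tooth. apply clamp_lo. apply (le_INR 1) in HP; simpl in HP; lra. lra. Qed.
Lemma tooth_mid P x k : INR k * INR P <= x <= INR k * INR P + INR P - 1 -> tooth P x k = x - INR k * INR P.
Proof. intros H. unfold tooth. apply clamp_mid. lra. Qed.

Lemma zigzag_on_tooth P cnt a x : (1 <= P)%nat -> (a < cnt)%nat ->
  INR a * INR P <= x <= INR a * INR P + INR P - 1 ->
  zigzag P cnt x = (INR P - 1) * parity a + (-1) ^ a * (x - INR a * INR P).
Proof.
  intros HP Ha Hx. unfold zigzag.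
  rewrite (sumR_prefix_at cnt a (fun k => (-1) ^ k * (INR P - 1)) ((-1) ^ a * (x - INR a * INR P))); auto.
  - rewrite (sumR_ext a _ (fun k => (INR P - 1) * (-1) ^ k)) by (intros; ring).
    rewrite sumR_scal, sumR_sign. ring.
  - intros k Hk. rewrite tooth_full; auto. assert (INR k + 1 <= INR a) by (apply INR_lt_S; lia).
    assert (0 <= INR P) by apply pos_INR. nra.
  - rewrite tooth_mid; auto.
  - intros k Hk. rewrite tooth_zero; auto. ring. assert (INR a + 1 <= INR k) by (apply INR_lt_S; lia).
    assert (0 <= INR P) by apply pos_INR. nra.
Qed.

Lemma zigzag_between P cnt a x : (1 <= P)%nat -> (a <= cnt)%nat ->
  INR a * INR P - 1 <= x -> ((a < cnt)%nat -> x <= INR a * INR P) ->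
  zigzag P cnt x = (INR P - 1) * parity a.
Proof.
  intros HP Ha Hx1 Hx2. unfold zigzag.
  destruct (Nat.eq_dec a cnt) as [E|E].
  - subst a. rewrite (sumR_ext cnt _ (fun k => (INR P - 1) * (-1) ^ k)).
    + rewrite sumR_scal, sumR_sign. ring.
    + intros k Hk. rewrite tooth_full; auto. ring. assert (INR k + 1 <= INR cnt) by (apply INR_lt_S; lia).
      assert (0 <= INR P) by apply pos_INR. nra.
  - specialize (Hx2 ltac:(lia)).
    rewrite (sumR_prefix_at cnt a (fun k => (-1) ^ k * (INR P - 1)) 0); auto; try lia.
    + rewrite (sumR_ext a _ (fun k => (INR P - 1) * (-1) ^ k)) by (intros; ring).
      rewrite sumR_scal, sumR_sign. ring.
    + intros k Hk. rewrite tooth_full; auto. assert (INR k + 1 <= INR a) by (apply INR_lt_S; lia).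
      assert (0 <= INR P) by apply pos_INR. nra.
    + rewrite tooth_zero; auto. ring.
    + intros k Hk. rewrite tooth_zero; auto. ring. assert (INR a + 1 <= INR k) by (apply INR_lt_S; lia).
      assert (0 <= INR P) by apply pos_INR. nra.
Qed.

Lemma zigzag_nonpos P cnt x : (1 <= P)%nat -> x <= 0 -> zigzag P cnt x = 0.
Proof. intros HP Hx. unfold zigzag. apply sumR_zero. intros k Hk. rewrite tooth_zero; auto. ring.
  assert (0 <= INR k * INR P) by (apply Rmult_le_pos; apply pos_INR). lra. Qed.

Lemma zigzag_S P k x : zigzag P (S k) x = zigzag P k x + (-1) ^ k * tooth P x k.
Proof. reflexivity. Qed.

Definition snake (N a c : nat) : nat := if Nat.even a then c else (N - 1 - c)%nat.

Lemma snake_lt N a c : (c < N)%nat -> (snake N a c < N)%nat.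
Proof. unfold snake. destruct (Nat.even a); lia. Qed.

Lemma snake_invol N a c : (c < N)%nat -> snake N a (snake N a c) = c.
Proof. unfold snake. destruct (Nat.even a); lia. Qed.

Lemma parity_snake N a : (1 <= N)%nat -> (INR N - 1) * parity a = INR (snake N a 0).
Proof. intros HN. unfold parity, snake. destruct (Nat.even a); simpl; [ring|]. rewrite !minus_INR by lia. simpl. ring. Qed.

Lemma zigzag_nat P cnt a c : (1 <= P)%nat -> (a < cnt)%nat -> (c < P)%nat ->
  zigzag P cnt (INR (a * P + c)) = INR (snake P a c).
Proof.
  intros HP Ha Hc.
  assert (HcR : INR c + 1 <= INR P) by (apply INR_lt_S; lia).
  rewrite (zigzag_on_tooth P cnt a (INR (a * P + c))) by (try lia; rewrite plus_INR, mult_INR; assert (0 <= INR c) by apply pos_INR; lra).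
  rewrite plus_INR, mult_INR. unfold snake, parity. destruct (Nat.even a) eqn:E.
  - rewrite pow_m1_even by auto. ring.
  - rewrite pow_m1_odd by auto. rewrite !minus_INR by lia. simpl. ring.
Qed.

Lemma tooth_mono P x y k : (1 <= P)%nat -> x <= y -> tooth P x k <= tooth P y k.
Proof. intros HP H. unfold tooth. apply clamp_mono. apply (le_INR 1) in HP; simpl in HP; lra. lra. Qed.

Lemma tooth_lip P x y k : (1 <= P)%nat -> x <= y -> tooth P y k - tooth P x k <= y - x.
Proof. intros HP H. unfold tooth. pose proof (clamp_lip (INR P - 1) (y - INR k * INR P) (x - INR k * INR P)).
  apply (le_INR 1) in HP; simpl in HP. specialize (H0 ltac:(lra)). unfold Rabs in H0 at 1 2.
  repeat destruct Rcase_abs; lra. Qed.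

Lemma staircase_full P c z : (1 <= P)%nat -> INR c * INR P - 1 <= z ->
  staircase P c z = INR c * (INR P - 1).
Proof.
  intros HP Hz. unfold staircase. rewrite <- sumR_const. apply sumR_ext. intros k Hk.
  apply tooth_full; auto. assert (INR k + 1 <= INR c) by (apply INR_lt_S; lia).
  assert (0 <= INR P) by apply pos_INR. nra.
Qed.

Lemma staircase_lip P cnt x y : (1 <= P)%nat -> x <= y -> staircase P cnt y - staircase P cnt x <= y - x.
Proof.
  intros HP. revert x y. induction cnt as [|c IH]; intros x y H.
  { unfold staircase; simpl; lra. }
  unfold staircase; simpl sumR; fold (staircase P c x) (staircase P c y).
  assert (Hc0 : 0 <= INR c * INR P) by (apply Rmult_le_pos; apply pos_INR).
  destruct (Rle_dec y (INR c * INR P)) as [Hy|Hy].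
  { rewrite (tooth_zero P y c), (tooth_zero P x c) by (auto; lra). specialize (IH x y H). lra. }
  destruct (Rle_dec (INR c * INR P - 1) x) as [Hx|Hx].
  - rewrite !staircase_full by (auto; lra). pose proof (tooth_lip P x y c HP H). lra.
  - set (z := INR c * INR P). pose proof (IH x (z - 1) ltac:(unfold z; lra)).
    rewrite !staircase_full in * by (auto; unfold z; lra).
    pose proof (tooth_lip P z y c HP ltac:(unfold z; lra)).
    rewrite (tooth_zero P z c), (tooth_zero P x c) in * by (auto; unfold z; lra). lra.
Qed.

Lemma zigzag_lip P cnt x y : (1 <= P)%nat -> Rabs (zigzag P cnt x - zigzag P cnt y) <= Rabs (x - y).
Proof.
  intros HP. rewrite <- (Rmult_1_l (Rabs (x - y))). revert x y. apply lip_of_ordered.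
  intros a b Hab. unfold zigzag. rewrite <- sumR_minus, Rmult_1_l.
  eapply Rle_trans; [apply sumR_abs|].
  rewrite (sumR_ext cnt _ (fun k => tooth P b k - tooth P a k)).
  - rewrite sumR_minus. fold (staircase P cnt b) (staircase P cnt a). apply staircase_lip; auto.
  - intros k Hk. rewrite <- Rmult_minus_distr_l, Rabs_mult, pow_m1_abs, Rmult_1_l.
    apply Rabs_right. pose proof (tooth_mono P a b k HP Hab). lra.
Qed.

(** * Interpolation with Lipschitz constant 2 *)

(* The [j]-th summand rises from 0 to 2 while [b] crosses
   [[j - (1 + H j) / 2, j + (1 - H j) / 2]]; at [b = b0] the earlier ones are
   complete, the later ones have not started and the [b0]-th equals
   [H b0 + 1], and the last two terms remove the constant [2 b0 + 1]. *)
Definition pick (N : nat) (H : nat -> R) (b : R) :=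
  sumR N (fun j => relu (H j + 2 * (b - INR j) + 1) - relu (H j + 2 * (b - INR j) - 1))
  - relu (2 * b + 1) + relu (2 * b - 2 * INR N + 1).

Lemma pick_nat N H b0 : (b0 < N)%nat -> (forall j, (j < N)%nat -> -1 <= H j <= 1) ->
  pick N H (INR b0) = H b0.
Proof.
  intros Hb HH. unfold pick.
  assert (HN : INR b0 + 1 <= INR N) by (apply INR_lt_S; lia).
  assert (Hb0 : 0 <= INR b0) by apply pos_INR.
  rewrite (sumR_prefix_at N b0 (fun _ => 2) (H b0 + 1)); auto.
  - rewrite sumR_const. rewrite (relu_pos (2 * INR b0 + 1)) by lra.
    rewrite (relu_neg (2 * INR b0 - 2 * INR N + 1)) by lra. lra.
  - intros k Hk. specialize (HH k ltac:(lia)).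
    assert (INR k + 1 <= INR b0) by (apply INR_lt_S; lia).
    rewrite !relu_pos by lra. lra.
  - specialize (HH b0 Hb). replace (INR b0 - INR b0) with 0 by ring.
    rewrite relu_pos by lra. rewrite relu_neg by lra. lra.
  - intros k Hk. specialize (HH k ltac:(lia)).
    assert (INR b0 + 1 <= INR k) by (apply INR_lt_S; lia).
    rewrite !relu_neg by lra. lra.
Qed.

Lemma pick_on_cell N H b0 b : (S b0 < N)%nat -> (forall j, (j < N)%nat -> -1 <= H j <= 1) ->
  INR b0 <= b <= INR b0 + 1 ->
  pick N H b = H b0 - relu (H b0 + 2 * (b - INR b0) - 1) + relu (H (S b0) + 2 * (b - INR b0) - 1).
Proof.
  intros Hb HH Hbb. unfold pick.
  assert (HN : INR b0 + 2 <= INR N) by (replace 2 with (1+1) by lra; rewrite <- Rplus_assoc, <- !S_INR; apply le_INR; lia).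
  assert (Hb0 : 0 <= INR b0) by apply pos_INR.
  replace N with (b0 + S (N - b0 - 1))%nat by lia.
  rewrite sumR_split3.
  rewrite (sumR_ext b0 _ (fun _ => 2)).
  2:{ intros k Hk. specialize (HH k ltac:(lia)).
    assert (INR k + 1 <= INR b0) by (apply INR_lt_S; lia).
    rewrite !relu_pos by lra. lra. }
  rewrite sumR_const.
  rewrite (sumR_prefix_at (N - b0 - 1) 0 (fun _ => 0) (relu (H (S b0) + 2 * (b - INR b0) - 1))); try lia.
  - replace (b0 + S (N - b0 - 1))%nat with N by lia. simpl sumR.
    rewrite (relu_pos (2 * b + 1)) by lra. rewrite (relu_neg (2 * b - 2 * INR N + 1)) by lra.
    specialize (HH b0 ltac:(lia)).
    rewrite (relu_pos (H b0 + 2 * (b - INR b0) + 1)) by lra. lra.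
  - replace (b0 + 1)%nat with (S b0) by lia. rewrite S_INR.
    specialize (HH (S b0) ltac:(lia)).
    rewrite (relu_neg (H (S b0) + 2 * (b - (INR b0 + 1)) - 1)) by lra.
    replace (H (S b0) + 2 * (b - (INR b0 + 1)) + 1) with (H (S b0) + 2 * (b - INR b0) - 1) by ring. lra.
  - intros k Hk. specialize (HH (b0 + S k)%nat ltac:(lia)).
    assert (INR b0 + 2 <= INR (b0 + S k)) by (replace 2 with (1+1) by lra; rewrite <- Rplus_assoc, <- !S_INR; apply le_INR; lia).
    rewrite !relu_neg by lra. lra.
Qed.

Lemma pick_lip_cell N H b0 b b' : (S b0 < N)%nat -> (forall j, (j < N)%nat -> -1 <= H j <= 1) ->
  INR b0 <= b <= INR b0 + 1 -> INR b0 <= b' <= INR b0 + 1 ->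
  Rabs (pick N H b - pick N H b') <= 2 * Rabs (b - b').
Proof.
  intros Hb HH H1 H2. rewrite (pick_on_cell N H b0 b), (pick_on_cell N H b0 b') by auto.
  set (x := b - INR b0). set (y := b' - INR b0).
  replace (b - b') with (x - y) by (unfold x, y; ring).
  clearbody x y. relu_cases; unfold Rabs; repeat destruct Rcase_abs; lra.
Qed.

Lemma pick_ext N H H' b : (forall j, (j < N)%nat -> H j = H' j) -> pick N H b = pick N H' b.
Proof. intros E. unfold pick. rewrite (sumR_ext N _ (fun j => relu (H' j + 2 * (b - INR j) + 1) - relu (H' j + 2 * (b - INR j) - 1))). reflexivity.
  intros j Hj. rewrite E by auto. reflexivity. Qed.

Definition seg_value (N : nat) (Hs : nat -> nat -> R) (j : nat) (v : R) :=
  Hs j 0%nat + sumR (N - 1) (fun m => (Hs j (S m) - Hs j m) * clamp 1 (v - INR (S m) * INR N + 1)).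

(* On the [a]-th tooth of [zigzag N N] every [seg_value N Hs j] equals
   [Hs j a] and [pick] reads the column off the zigzag; on the gaps between
   teeth both move linearly. *)
Definition grid_fit (N : nat) (Hs : nat -> nat -> R) (v : R) :=
  pick N (fun j => seg_value N Hs j v) (zigzag N N v).

Section GridFit.
Variable N : nat.
Hypothesis HN : (2 <= N)%nat.
Variable Hs : nat -> nat -> R.
Hypothesis HHs : forall j a, (j < N)%nat -> (a < N)%nat -> -1 <= Hs j a <= 1.

Lemma INR_N_ge2 : 2 <= INR N.
Proof. apply (le_INR 2) in HN. simpl in HN. lra. Qed.

Lemma seg_value_on_seg j a v : (a < N)%nat -> INR a * INR N <= v <= INR a * INR N + INR N - 1 ->
  seg_value N Hs j v = Hs j a.
Proof.
  intros Ha Hv0. unfold seg_value. pose proof INR_N_ge2.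
  rewrite (sumR_prefix (N - 1) a (fun m => Hs j (S m) - Hs j m)); [| lia | |].
  - rewrite sumR_telescope. ring.
  - intros k Hk. rewrite clamp_hi by (try lra; rewrite S_INR;
      assert (INR k + 1 <= INR a) by (apply INR_lt_S; lia); nra). ring.
  - intros k Hk. rewrite clamp_lo by (try lra; rewrite S_INR;
      assert (INR a <= INR k) by (apply le_INR; lia); nra). ring.
Qed.

Lemma seg_value_above j v : INR (N - 1) * INR N <= v -> seg_value N Hs j v = Hs j (N - 1)%nat.
Proof.
  intros Hv0. unfold seg_value. pose proof INR_N_ge2.
  rewrite (sumR_prefix (N - 1) (N - 1) (fun m => Hs j (S m) - Hs j m)); [| lia | |].
  - rewrite sumR_telescope. ring.
  - intros k Hk. rewrite clamp_hi by (try lra; rewrite S_INR;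
      assert (INR k + 1 <= INR (N - 1)) by (apply INR_lt_S; lia); nra). ring.
  - intros; lia.
Qed.

Lemma seg_value_below j v : v <= 0 -> seg_value N Hs j v = Hs j 0%nat.
Proof.
  intros Hv0. unfold seg_value. pose proof INR_N_ge2.
  rewrite (sumR_zero (N - 1)); [ring|].
  intros k Hk. rewrite clamp_lo by (try lra; rewrite S_INR;
      assert (0 <= INR k) by apply pos_INR; nra). ring.
Qed.

Lemma seg_value_between j a v : (1 <= a <= N - 1)%nat -> INR a * INR N - 1 <= v <= INR a * INR N ->
  seg_value N Hs j v = Hs j (a - 1)%nat + (Hs j a - Hs j (a - 1)%nat) * (v - INR a * INR N + 1).
Proof.
  intros Ha Hv0. unfold seg_value. pose proof INR_N_ge2.
  rewrite (sumR_prefix_at (N - 1) (a - 1) (fun m => Hs j (S m) - Hs j m)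
     ((Hs j a - Hs j (a - 1)%nat) * (v - INR a * INR N + 1))); [| lia | | |].
  - rewrite sumR_telescope. ring.
  - intros k Hk. rewrite clamp_hi by (try lra; rewrite S_INR;
      assert (INR k + 1 + 1 <= INR a) by (rewrite <- !S_INR; apply le_INR; lia); nra). ring.
  - replace (S (a - 1)) with a by lia. rewrite clamp_mid. ring.
    lra.
  - intros k Hk. rewrite clamp_lo by (try lra; rewrite S_INR;
      assert (INR a + 1 <= INR k + 1) by (rewrite <- !S_INR; apply le_INR; lia); nra). ring.
Qed.

Lemma grid_fit_nat a c : (a < N)%nat -> (c < N)%nat ->
  grid_fit N Hs (INR (a * N + c)) = Hs (snake N a c) a.
Proof.
  intros Ha Hc. unfold grid_fit. rewrite zigzag_nat by lia.
  assert (HcR : INR c + 1 <= INR N) by (apply INR_lt_S; lia).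
  rewrite pick_nat.
  - apply seg_value_on_seg; auto. rewrite plus_INR, mult_INR. assert (0 <= INR c) by apply pos_INR. lra.
  - apply snake_lt; auto.
  - intros j Hj. rewrite (seg_value_on_seg j a); auto. rewrite plus_INR, mult_INR. assert (0 <= INR c) by apply pos_INR. lra.
Qed.

Lemma grid_fit_below v : v <= 0 -> grid_fit N Hs v = grid_fit N Hs 0.
Proof.
  intros Hv0. unfold grid_fit. rewrite (zigzag_nonpos N N v), (zigzag_nonpos N N 0) by (lia || lra).
  apply pick_ext. intros j Hj.
  rewrite seg_value_below, seg_value_below by lra. reflexivity.
Qed.

Lemma grid_fit_above v : INR N * INR N - 1 <= v -> grid_fit N Hs v = grid_fit N Hs (INR N * INR N - 1).
Proof.
  intros Hv0. pose proof INR_N_ge2. unfold grid_fit.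
  rewrite (zigzag_between N N N v), (zigzag_between N N N (INR N * INR N - 1)) by (lia || lra).
  apply pick_ext. intros j Hj.
  assert (E : INR (N - 1) = INR N - 1) by (rewrite minus_INR by lia; simpl; ring).
  rewrite !seg_value_above; auto; rewrite E; nra.
Qed.

Lemma grid_fit_lip_gap a x y : (1 <= a <= N - 1)%nat ->
  INR a * INR N - 1 <= x <= INR a * INR N -> INR a * INR N - 1 <= y <= INR a * INR N ->
  Rabs (grid_fit N Hs x - grid_fit N Hs y) <= 2 * Rabs (x - y).
Proof.
  intros Ha Hx Hy. pose proof INR_N_ge2. unfold grid_fit.
  rewrite (zigzag_between N N a x), (zigzag_between N N a y) by (lia || lra || auto).
  rewrite parity_snake by lia. set (b := snake N a 0).
  assert (Hb : (b < N)%nat) by (apply snake_lt; lia).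
  assert (Hval : forall z, INR a * INR N - 1 <= z <= INR a * INR N ->
    pick N (fun j => seg_value N Hs j z) (INR b) =
    Hs b (a - 1)%nat + (Hs b a - Hs b (a - 1)%nat) * (z - INR a * INR N + 1)).
  { intros z Hz. rewrite pick_nat; auto.
    - apply seg_value_between; auto.
    - intros j Hj. rewrite (seg_value_between j a) by auto.
      pose proof (HHs j (a - 1) Hj ltac:(lia)). pose proof (HHs j a Hj ltac:(lia)).
      assert (0 <= z - INR a * INR N + 1 <= 1) by lra. nra. }
  rewrite !Hval by lra.
  pose proof (HHs b (a - 1) Hb ltac:(lia)). pose proof (HHs b a Hb ltac:(lia)).
  replace (_ - _) with ((Hs b a - Hs b (a - 1)%nat) * (x - y)) by ring. rewrite Rabs_mult.
  apply Rmult_le_compat_r; [apply Rabs_pos|]. unfold Rabs; destruct Rcase_abs; lra.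
Qed.

Lemma grid_fit_lip_tooth a c x y : (a < N)%nat -> (S c < N)%nat ->
  INR a * INR N + INR c <= x <= INR a * INR N + INR c + 1 ->
  INR a * INR N + INR c <= y <= INR a * INR N + INR c + 1 ->
  Rabs (grid_fit N Hs x - grid_fit N Hs y) <= 2 * Rabs (x - y).
Proof.
  intros Ha Hc Hx Hy. pose proof INR_N_ge2.
  assert (HcR : INR c + 2 <= INR N) by (pose proof (INR_lt_S _ _ Hc); rewrite S_INR in *; lra).
  assert (Hc0 : 0 <= INR c) by apply pos_INR.
  assert (Hseg : forall z, INR a * INR N + INR c <= z <= INR a * INR N + INR c + 1 ->
    grid_fit N Hs z = pick N (fun j => Hs j a) ((INR N - 1) * parity a + (-1) ^ a * (z - INR a * INR N))).
  { intros z Hz. unfold grid_fit. rewrite (zigzag_on_tooth N N a z) by (lia || lra).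
    apply pick_ext. intros j Hj. apply seg_value_on_seg; auto; lra. }
  rewrite (Hseg x), (Hseg y) by lra.
  assert (HH' : forall j, (j < N)%nat -> -1 <= Hs j a <= 1) by (intros; apply HHs; auto).
  unfold parity. destruct (Nat.even a) eqn:E.
  - rewrite pow_m1_even by auto.
    replace (x - y) with (((INR N - 1) * 0 + 1 * (x - INR a * INR N))
                          - ((INR N - 1) * 0 + 1 * (y - INR a * INR N))) by ring.
    apply (pick_lip_cell N (fun j => Hs j a) c); auto; lra.
  - rewrite pow_m1_odd by auto.
    replace (x - y) with (- (((INR N - 1) * 1 + -1 * (x - INR a * INR N))
                             - ((INR N - 1) * 1 + -1 * (y - INR a * INR N)))) by ring.
    rewrite Rabs_Ropp.
    assert (EE : INR (N - 2 - c) = INR N - 2 - INR c) by (rewrite !minus_INR by lia; simpl; ring).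
    apply (pick_lip_cell N (fun j => Hs j a) (N - 2 - c)); auto; try lia; rewrite EE; lra.
Qed.

Lemma grid_fit_lip_cell : lip_on_cells (grid_fit N Hs) 2.
Proof.
  intros n x y Hx Hy. pose proof INR_N_ge2.
  destruct (Rle_dec (INR N * INR N - 1) (INR n)) as [Hh|Hh].
  { rewrite (grid_fit_above x), (grid_fit_above y) by lra. replace (_ - _) with 0 by ring.
    rewrite Rabs_R0. pose proof (Rabs_pos (x - y)). lra. }
  assert (Hn : (n + 2 <= N * N)%nat).
  { assert (INR (n + 1) < INR (N * N)) by (rewrite plus_INR, mult_INR; simpl; lra).
    apply INR_lt in H0. lia. }
  set (a := (n / N)%nat). set (c := (n mod N)%nat).
  assert (Hnac : n = (a * N + c)%nat) by (unfold a, c; rewrite (Nat.div_mod n N) at 1 by lia; lia).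
  assert (Hc : (c < N)%nat) by (unfold c; apply Nat.mod_upper_bound; lia).
  assert (Ha : (a < N)%nat) by (unfold a; apply Nat.Div0.div_lt_upper_bound; lia).
  rewrite Hnac, plus_INR, mult_INR in Hx, Hy.
  destruct (Nat.eq_dec c (N - 1)) as [Ec|Ec].
  - assert (EcR : INR c = INR N - 1) by (rewrite Ec, minus_INR by lia; simpl; ring).
    apply (grid_fit_lip_gap (S a)); rewrite ?S_INR; try nra.
    split; [lia|]. destruct (Nat.eq_dec a (N - 1)); [|lia]. exfalso. subst a. nia.
  - apply (grid_fit_lip_tooth a c); auto; lia.
Qed.
End GridFit.

Section ChainFit.
Variable N : nat.
Hypothesis HN : (2 <= N)%nat.
Variable NS : nat.
Variable vals : nat -> R.
Hypothesis Hvals : forall u, 0 <= vals u <= 1.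

(* [chain_fit] glues [NS] grids end to end, the [k]-th one fitting the
   increments of [vals] over the [k]-th block of length [N^2 - 1], so that the
   completed stages telescope to [vals (k * block_len)]. *)
Definition block_len := (N * N - 1)%nat.
Definition block_incr (k : nat) (j a : nat) := vals (k * block_len + (a * N + snake N a j)) - vals (k * block_len).
Definition chain_fit (u : R) := vals 0%nat + sumR NS (fun k => grid_fit N (block_incr k) (u - INR (k * block_len))).

Lemma block_incr_range k j a : -1 <= block_incr k j a <= 1.
Proof. unfold block_incr. pose proof (Hvals (k * block_len + (a * N + snake N a j))). pose proof (Hvals (k * block_len)). lra. Qed.

Lemma INR_block_len : INR block_len = INR N * INR N - 1.
Proof. unfold block_len. rewrite minus_INR, mult_INR by nia. simpl. ring. Qed.

Lemma grid_fit_block_nat k a c : (a < N)%nat -> (c < N)%nat ->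
  grid_fit N (block_incr k) (INR (a * N + c)) = vals (k * block_len + (a * N + c)) - vals (k * block_len).
Proof. intros Ha Hc. rewrite grid_fit_nat; auto. unfold block_incr. rewrite snake_invol; auto.
  intros; apply block_incr_range. Qed.

Lemma grid_fit_block_below k v : v <= 0 -> grid_fit N (block_incr k) v = 0.
Proof. intros Hv. rewrite grid_fit_below by first [lra | auto | intros; apply block_incr_range].
  assert (E : grid_fit N (block_incr k) 0 = grid_fit N (block_incr k) (INR (0 * N + 0))) by (f_equal; simpl; ring).
  rewrite E, grid_fit_block_nat by lia.
  replace (k * block_len + (0 * N + 0))%nat with (k * block_len)%nat by lia. ring. Qed.

Lemma grid_fit_block_above k v : INR block_len <= v -> grid_fit N (block_incr k) v = vals (S k * block_len) - vals (k * block_len).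
Proof. intros Hv. rewrite INR_block_len in Hv. rewrite grid_fit_above by first [lra | auto | intros; apply block_incr_range].
  replace (INR N * INR N - 1) with (INR ((N - 1) * N + (N - 1))).
  - rewrite grid_fit_block_nat by lia. f_equal. f_equal. unfold block_len. nia.
  - rewrite plus_INR, mult_INR, minus_INR by lia. simpl. ring.
Qed.

Lemma chain_fit_nat u : (u <= NS * block_len)%nat -> (1 <= NS)%nat -> chain_fit (INR u) = vals u.
Proof.
  intros Hu HS. unfold chain_fit.
  assert (HZ : (1 <= block_len)%nat) by (unfold block_len; nia).
  set (k0 := Nat.min (u / block_len) (NS - 1)).
  assert (Hk0 : (k0 < NS)%nat) by (unfold k0; lia).
  assert (Hk0a : (k0 * block_len <= u)%nat).
  { unfold k0. assert (Nat.min (u / block_len) (NS - 1) <= u / block_len)%nat by lia.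
    assert (u / block_len * block_len <= u)%nat by (rewrite Nat.mul_comm; apply Nat.Div0.mul_div_le).
    nia. }
  assert (Hk0b : (u <= k0 * block_len + block_len)%nat).
  { unfold k0. destruct (Nat.le_gt_cases (u / block_len) (NS - 1)).
    - rewrite Nat.min_l by lia. pose proof (Nat.div_mod u block_len ltac:(lia)). pose proof (Nat.mod_upper_bound u block_len ltac:(lia)). nia.
    - rewrite Nat.min_r by lia. replace (NS - 1 + 1)%nat with NS by lia. nia. }
  set (loc := (u - k0 * block_len)%nat).
  assert (Hloc : (loc <= (N - 1) * N + (N - 1))%nat) by (unfold loc, block_len in *; nia).
  set (a := (loc / N)%nat). set (c := (loc mod N)%nat).
  assert (Hlac : loc = (a * N + c)%nat) by (unfold a, c; rewrite (Nat.div_mod loc N) at 1 by lia; lia).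
  assert (Hc : (c < N)%nat) by (unfold c; apply Nat.mod_upper_bound; lia).
  assert (Ha : (a < N)%nat) by (unfold a; apply Nat.Div0.div_lt_upper_bound; nia).
  rewrite (sumR_prefix_at NS k0 (fun k => vals (S k * block_len) - vals (k * block_len)) (vals u - vals (k0 * block_len))); auto.
  - rewrite (sumR_telescope k0 (fun k => vals (k * block_len))). simpl. ring.
  - intros k Hk. apply grid_fit_block_above. rewrite <- minus_INR by nia. apply le_INR. nia.
  - replace (INR u - INR (k0 * block_len)) with (INR (a * N + c)).
    + rewrite grid_fit_block_nat by auto. rewrite <- Hlac. unfold loc. f_equal. f_equal. lia.
    + rewrite <- Hlac. unfold loc. rewrite minus_INR by lia. reflexivity.
  - intros k Hk. apply grid_fit_block_below. assert (INR u <= INR (k * block_len)) by (apply le_INR; nia). lra.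
Qed.

Lemma chain_fit_nonpos x : x <= 0 -> chain_fit x = vals 0%nat.
Proof.
  intros Hx. unfold chain_fit. rewrite sumR_zero; [ring|]. intros k Hk.
  apply grid_fit_block_below. pose proof (pos_INR (k * block_len)). lra.
Qed.

Lemma chain_fit_lip x y : Rabs (chain_fit x - chain_fit y) <= 2 * Rabs (x - y).
Proof.
  apply lip_of_lip_on_cells; [lra| intros z Hz; rewrite !chain_fit_nonpos by lra; reflexivity |].
  intros n a b Ha Hb. unfold chain_fit.
  replace (vals 0%nat + _ - _) with (sumR NS (fun k => grid_fit N (block_incr k) (a - INR (k * block_len))
    - grid_fit N (block_incr k) (b - INR (k * block_len)))) by (rewrite sumR_minus; ring).
  eapply Rle_trans; [apply sumR_abs|].
  assert (HZ : (1 <= block_len)%nat) by (unfold block_len; nia).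
  set (k0 := (n / block_len)%nat).
  assert (Hdm : (n = k0 * block_len + n mod block_len)%nat)
    by (unfold k0; rewrite (Nat.div_mod n block_len) at 1 by lia; lia).
  pose proof (Nat.mod_upper_bound n block_len ltac:(lia)).
  eapply Rle_trans; [apply (sumR_le NS _ (fun k => if Nat.eqb k k0 then 2 * Rabs (a - b) else 0))|].
  - intros k Hk. destruct (Nat.eqb_spec k k0) as [->|E].
    + replace (a - b) with ((a - INR (k0 * block_len)) - (b - INR (k0 * block_len))) by ring.
      apply (grid_fit_lip_cell N HN (block_incr k0) (fun j a _ _ => block_incr_range k0 j a)
               (n - k0 * block_len)%nat); rewrite minus_INR by lia; lra.
    + destruct (Nat.lt_ge_cases k k0).
      * assert (INR (k * block_len) + INR block_len <= INR n) by (rewrite <- plus_INR; apply le_INR; nia).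
        rewrite !grid_fit_block_above by lra. rewrite Rminus_diag, Rabs_R0. lra.
      * assert (INR n + 1 <= INR (k * block_len)) by (apply INR_lt_S; nia).
        rewrite !grid_fit_block_below by lra. rewrite Rminus_diag, Rabs_R0. lra.
  - apply sumR_single_le. pose proof (Rabs_pos (a - b)). lra.
Qed.
End ChainFit.

(** * Ternary digits *)

Definition digit (x : R) := clamp 1 (3 * x - 1).
Definition shift3 (x : R) := 3 * x - 2 * digit x.
Fixpoint shift3_iter (k : nat) (x : R) : R := match k with O => x | S k' => shift3 (shift3_iter k' x) end.

Lemma shift3_lip x y : Rabs (shift3 x - shift3 y) <= 3 * Rabs (x - y).
Proof. unfold shift3, digit, clamp. relu_cases; unfold Rabs; repeat destruct Rcase_abs; lra. Qed.

Lemma shift3_iter_lip k x y : Rabs (shift3_iter k x - shift3_iter k y) <= 3 ^ k * Rabs (x - y).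
Proof. induction k; simpl. lra. eapply Rle_trans; [apply shift3_lip|]. lra. Qed.

Lemma digit_iter_lip k x y : Rabs (digit (shift3_iter k x) - digit (shift3_iter k y)) <= 3 ^ (S k) * Rabs (x - y).
Proof. unfold digit. eapply Rle_trans; [apply clamp_lip; lra|].
  replace (3 * shift3_iter k x - 1 - (3 * shift3_iter k y - 1)) with (3 * (shift3_iter k x - shift3_iter k y)) by ring.
  rewrite Rabs_mult, Rabs_right by lra. simpl. pose proof (shift3_iter_lip k x y). lra. Qed.

Lemma digit_range x : 0 <= digit x <= 1.
Proof. unfold digit. apply clamp_range. lra. Qed.

Definition b2R (b : bool) : R := if b then 1 else 0.

Fixpoint ternary (be : nat -> bool) (k n : nat) : R :=
  match n with O => 0 | S n' => (2 * b2R (be k) + ternary be (S k) n') / 3 end.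

Lemma ternary_range be n : forall k, 0 <= ternary be k n < 1.
Proof. induction n; intros k; simpl. lra. specialize (IHn (S k)). unfold b2R. destruct (be k); lra. Qed.

Lemma shift3_ternary be k n : shift3 (ternary be k (S n)) = ternary be (S k) n /\ digit (ternary be k (S n)) = b2R (be k).
Proof. simpl. pose proof (ternary_range be n (S k)). unfold shift3, digit, b2R. destruct (be k).
  - rewrite clamp_hi by lra. split; lra.
  - rewrite clamp_lo by lra. split; lra. Qed.

Lemma shift3_iter_ternary be M k : (k <= M)%nat -> shift3_iter k (ternary be 0 M) = ternary be k (M - k).
Proof. induction k; intros H. simpl. rewrite Nat.sub_0_r. reflexivity.
  simpl. rewrite IHk by lia. replace (M - k)%nat with (S (M - S k)) by lia. apply shift3_ternary. Qed.

Lemma digit_iter_ternary be M k : (k < M)%nat -> digit (shift3_iter k (ternary be 0 M)) = b2R (be k).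
Proof. intros H. rewrite shift3_iter_ternary by lia. replace (M - k)%nat with (S (M - S k)) by lia. apply shift3_ternary. Qed.

(** * One bit-extraction unit *)

Definition gate (b c : R) := clamp 1 (b - c) - clamp 1 (- c).

Lemma gate_0 b : 0 <= b <= 1 -> gate b 0 = b.
Proof. intros. unfold gate. rewrite clamp_mid by lra. rewrite clamp_lo by lra. ring. Qed.
Lemma gate_1 b : 0 <= b <= 1 -> gate b 1 = 0.
Proof. intros. unfold gate. rewrite clamp_lo by lra. rewrite clamp_lo by lra. ring. Qed.
Lemma gate_m1 b : 0 <= b <= 1 -> gate b (-1) = 0.
Proof. intros. unfold gate. rewrite clamp_hi by lra. rewrite clamp_hi by lra. ring. Qed.
Lemma gate_lip_l b b' c : Rabs (gate b c - gate b' c) <= Rabs (b - b').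
Proof. unfold gate. replace (_ - _) with (clamp 1 (b - c) - clamp 1 (b' - c)) by ring.
  eapply Rle_trans; [apply clamp_lip; lra|]. right. f_equal. ring. Qed.
Lemma gate_lip_r b c c' : Rabs (gate b c - gate b c') <= 2 * Rabs (c - c').
Proof. unfold gate.
  pose proof (clamp_lip 1 (b - c) (b - c') ltac:(lra)). pose proof (clamp_lip 1 (- c) (- c') ltac:(lra)).
  replace (b - c - (b - c')) with (- (c - c')) in H by ring. replace (- c - - c') with (- (c - c')) in H0 by ring.
  rewrite Rabs_Ropp in H, H0. revert H H0. generalize (clamp 1 (b - c)) (clamp 1 (b - c')) (clamp 1 (- c)) (clamp 1 (- c')).
  intros. unfold Rabs in *; repeat destruct Rcase_abs; lra. Qed.

Lemma gate_nonneg b c : 0 <= b -> 0 <= gate b c.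
Proof. intros. unfold gate. pose proof (clamp_mono 1 (- c) (b - c) ltac:(lra) ltac:(lra)). lra. Qed.

Lemma pow3_ge M : 3 <= 3 ^ (S M).
Proof. induction M. simpl; lra. change (3 ^ S (S M)) with (3 * 3 ^ (S M)). lra. Qed.

Lemma pow3_bound M : 4 * INR M <= 3 ^ (S M).
Proof. induction M. simpl; lra. rewrite S_INR. change (3 ^ S (S M)) with (3 * 3 ^ (S M)).
  pose proof (pow3_ge M). lra. Qed.

Section BitUnit.
Variable N : nat.
Hypothesis HN : (2 <= N)%nat.
Variable NS : nat.
Hypothesis HNS : (1 <= NS)%nat.
Variable M : nat.
Hypothesis HM : (1 <= M)%nat.
Variable be : nat -> bool.

Definition seg_len := (NS * block_len N + 1)%nat.
Definition code_index (k u : nat) := (k * seg_len + snake seg_len k u)%nat.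
Definition code (u : nat) : R := ternary (fun k => be (code_index k u)) 0 M.
Definition unit_pos (t : R) := zigzag seg_len M t.
Definition code_fit (u : R) := chain_fit N NS code u.
Definition ramp (j : nat) (t : R) := clamp 1 (t - INR j * INR seg_len + 1).
Definition selector (k : nat) (t : R) := ramp k t + ramp (S k) t - 1.
Definition bit_term (k : nat) (t : R) := gate (digit (shift3_iter k (code_fit (unit_pos t)))) (selector k t).
Definition bit_fn (t : R) := sumR M (fun k => bit_term k t).

Lemma seg_len_ge1 : (1 <= seg_len)%nat.
Proof. unfold seg_len. lia. Qed.

Lemma code_range u : 0 <= code u <= 1.
Proof. unfold code. pose proof (ternary_range (fun k => be (code_index k u)) M 0). lra. Qed.

Lemma ramp_nat j i : (1 <= j)%nat -> ramp j (INR i) = if Nat.leb (j * seg_len) i then 1 else 0.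
Proof.
  intros Hj. unfold ramp. destruct (Nat.leb_spec (j * seg_len) i) as [H|H].
  - apply le_INR in H. rewrite mult_INR in H. apply clamp_hi; lra.
  - assert (INR (i + 1) <= INR (j * seg_len)) by (apply le_INR; lia). rewrite plus_INR, mult_INR in H0. simpl in H0.
    apply clamp_lo; lra.
Qed.

Lemma ramp0 t : 0 <= t -> ramp 0 t = 1.
Proof. intros. unfold ramp. apply clamp_hi; simpl; lra. Qed.

Lemma bit_fn_nat i : (i < M * seg_len)%nat -> bit_fn (INR i) = b2R (be i).
Proof.
  intros Hi. pose proof seg_len_ge1.
  set (r := (i / seg_len)%nat). set (j := (i mod seg_len)%nat).
  assert (Hij : i = (r * seg_len + j)%nat) by (unfold r, j; rewrite (Nat.div_mod i seg_len) at 1 by lia; lia).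
  assert (Hj : (j < seg_len)%nat) by (unfold j; apply Nat.mod_upper_bound; lia).
  assert (Hr : (r < M)%nat) by (unfold r; apply Nat.Div0.div_lt_upper_bound; nia).
  assert (Hu : unit_pos (INR i) = INR (snake seg_len r j)) by (unfold unit_pos; rewrite Hij; apply zigzag_nat; auto).
  assert (Hth : code_fit (unit_pos (INR i)) = code (snake seg_len r j)).
  { rewrite Hu. unfold code_fit. apply chain_fit_nat; [exact HN | intros; apply code_range | | exact HNS].
    unfold snake. unfold seg_len in *. destruct (Nat.even r); lia. }
  assert (Hcd : forall k, selector k (INR i) = if Nat.ltb k r then 1 else if Nat.eqb k r then 0 else -1).
  { intros k. unfold selector.
    assert (E : forall j', ramp j' (INR i) = if Nat.leb j' r then 1 else 0).
    { intros j'. destruct j'. apply ramp0, pos_INR. rewrite ramp_nat by lia.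
      destruct (Nat.leb_spec (S j' * seg_len) i), (Nat.leb_spec (S j') r); auto; nia. }
    rewrite !E. destruct (Nat.leb_spec k r), (Nat.leb_spec (S k) r), (Nat.ltb_spec k r), (Nat.eqb_spec k r); try lia; ring. }
  unfold bit_fn, bit_term. rewrite (sumR_prefix_at M r (fun _ => 0) (b2R (be i))); auto.
  - rewrite sumR_const. ring.
  - intros k Hk. rewrite Hcd, Hth. destruct (Nat.ltb_spec k r); [|lia]. apply gate_1, digit_range.
  - rewrite Hcd, Hth. destruct (Nat.ltb_spec r r); [lia|]. rewrite Nat.eqb_refl.
    rewrite gate_0 by apply digit_range. unfold code. rewrite digit_iter_ternary by auto. f_equal. f_equal.
    unfold code_index. rewrite snake_invol by auto. lia.
  - intros k Hk. rewrite Hcd, Hth. destruct (Nat.ltb_spec k r); [lia|]. destruct (Nat.eqb_spec k r); [lia|].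
    apply gate_m1, digit_range.
Qed.

Lemma bit_fn_nonneg t : 0 <= bit_fn t.
Proof. unfold bit_fn, bit_term. apply sumR_nonneg. intros. apply gate_nonneg. apply digit_range. Qed.

Lemma ramp_lip j x y : Rabs (ramp j x - ramp j y) <= Rabs (x - y).
Proof. unfold ramp. eapply Rle_trans; [apply clamp_lip; lra|]. right; f_equal; ring. Qed.

Lemma bit_terms_lip_tooth (n : nat) x y : INR n <= x <= INR n + 1 -> INR n <= y <= INR n + 1 ->
  (forall j, (1 <= j <= M)%nat -> S n <> (j * seg_len)%nat) ->
  sumR M (fun k => Rabs (bit_term k x - bit_term k y)) <= 3 ^ (S M) * Rabs (x - y).
Proof.
  intros Hx Hy Hnf. pose proof seg_len_ge1. pose proof (pos_INR n).
  assert (Hr : forall j, (j <= M)%nat -> ramp j x = ramp j y).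
  { intros j Hj. destruct j as [|j]; [rewrite !ramp0 by lra; reflexivity|].
    specialize (Hnf (S j) ltac:(lia)). unfold ramp.
    destruct (Nat.lt_ge_cases (S n) (S j * seg_len)) as [Hl|Hl].
    - assert (INR (S n) + 1 <= INR (S j * seg_len)) by (apply INR_lt_S; lia).
      rewrite S_INR, mult_INR in H1. rewrite !clamp_lo by lra. reflexivity.
    - assert (INR (S j * seg_len) <= INR n) by (apply le_INR; lia). rewrite mult_INR in H1.
      rewrite !clamp_hi by lra. reflexivity. }
  eapply Rle_trans.
  - apply (sumR_le M _ (fun k => Rabs (x - y) * (2 * 3 ^ (S k)))). intros k Hk.
    unfold bit_term, selector. rewrite (Hr k), (Hr (S k)) by lia.
    eapply Rle_trans; [apply gate_lip_l|]. eapply Rle_trans; [apply digit_iter_lip|].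
    pose proof (chain_fit_lip N HN NS code code_range (unit_pos x) (unit_pos y)).
    pose proof (zigzag_lip seg_len M x y seg_len_ge1).
    fold (code_fit (unit_pos x)) (code_fit (unit_pos y)) (unit_pos x) (unit_pos y) in *.
    assert (0 <= 3 ^ (S k)) by (apply pow_le; lra). nra.
  - rewrite sumR_scal, sumR_pow3. pose proof (Rabs_pos (x - y)). nra.
Qed.

Lemma bit_terms_lip_fold (j : nat) x y : (1 <= j <= M)%nat ->
  INR j * INR seg_len - 1 <= x <= INR j * INR seg_len -> INR j * INR seg_len - 1 <= y <= INR j * INR seg_len ->
  sumR M (fun k => Rabs (bit_term k x - bit_term k y)) <= 3 ^ (S M) * Rabs (x - y).
Proof.
  intros Hj Hx Hy. pose proof seg_len_ge1.
  assert (Hu : unit_pos x = unit_pos y).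
  { unfold unit_pos. rewrite (zigzag_between seg_len M j x), (zigzag_between seg_len M j y); auto; lia || lra. }
  eapply Rle_trans.
  - apply (sumR_le M _ (fun k => 4 * Rabs (x - y))). intros k Hk.
    unfold bit_term. rewrite Hu. eapply Rle_trans; [apply gate_lip_r|]. unfold selector.
    pose proof (ramp_lip k x y). pose proof (ramp_lip (S k) x y).
    revert H0 H1. generalize (ramp k x) (ramp k y) (ramp (S k) x) (ramp (S k) y). intros.
    unfold Rabs in *; repeat destruct Rcase_abs; lra.
  - rewrite sumR_const. pose proof (pow3_bound M). pose proof (Rabs_pos (x - y)). nra.
Qed.

(* Inside a cell the unit position moves 1-Lipschitz and the selectors are
   frozen, except on the cell just before a segment boundary, where the unit
   position is frozen and only the selectors move. *)
Lemma bit_fn_lip_cell : lip_on_cells (fun t => bit_fn (relu t)) (3 ^ (S M)).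
Proof.
  intros n x y Hx Hy. pose proof seg_len_ge1. pose proof (pos_INR n).
  rewrite !relu_pos by lra.
  unfold bit_fn. rewrite <- sumR_minus. eapply Rle_trans; [apply sumR_abs|].
  destruct (Nat.eq_dec (S n mod seg_len) 0) as [Hm|Hm];
    [destruct (Nat.le_gt_cases (S n / seg_len) M) as [Hq|Hq]|].
  - set (j := (S n / seg_len)%nat).
    assert (Hsn : S n = (j * seg_len)%nat) by (unfold j; rewrite (Nat.div_mod (S n) seg_len) at 1 by lia; lia).
    assert (HjR : INR j * INR seg_len = INR n + 1) by (rewrite <- mult_INR, <- Hsn, S_INR; ring).
    apply (bit_terms_lip_fold j); [nia|lra|lra].
  - apply (bit_terms_lip_tooth n); auto. intros j Hj E. rewrite E, Nat.div_mul in Hq by lia. lia.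
  - apply (bit_terms_lip_tooth n); auto. intros j Hj E. apply Hm. rewrite E. apply Nat.Div0.mod_mul.
Qed.

Lemma bit_fn_lip x y : Rabs (bit_fn (relu x) - bit_fn (relu y)) <= 3 ^ (S M) * Rabs (x - y).
Proof.
  apply (lip_of_lip_on_cells (fun t => bit_fn (relu t))); [apply pow_le; lra| |apply bit_fn_lip_cell].
  intros z Hz. rewrite relu_neg by lra. rewrite relu_neg by lra. reflexivity.
Qed.
End BitUnit.

(** * Layer-by-layer evaluation *)

Definition dot (n : nat) (c s : nat -> R) := sumR n (fun o => c o * s o).
Definition single (k : nat) (a : R) : nat -> R := fun o => if Nat.eqb o k then a else 0.
Definition block (off len : nat) (f : nat -> R) : nat -> R :=
  fun o => if andb (Nat.leb off o) (Nat.ltb o (off + len)) then f (o - off)%nat else 0.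
Definition vadd (c1 c2 : nat -> R) : nat -> R := fun o => c1 o + c2 o.
Definition vscale (a : R) (c : nat -> R) : nat -> R := fun o => a * c o.
Definition vzero : nat -> R := fun _ => 0.

Lemma dot_single n k a s : (k < n)%nat -> dot n (single k a) s = a * s k.
Proof. intros H. unfold dot, single.
  rewrite (sumR_ext n _ (fun o => if Nat.eqb o k then a * s k else 0)).
  - apply sumR_single; auto.
  - intros i Hi. destruct (Nat.eqb_spec i k); subst; ring. Qed.

Lemma dot_vadd n c1 c2 s : dot n (vadd c1 c2) s = dot n c1 s + dot n c2 s.
Proof. unfold dot, vadd. rewrite <- sumR_plus. apply sumR_ext. intros; ring. Qed.

Lemma dot_vscale n a c s : dot n (vscale a c) s = a * dot n c s.
Proof. unfold dot, vscale. rewrite <- sumR_scal. apply sumR_ext. intros; ring. Qed.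

Lemma dot_vzero n s : dot n vzero s = 0.
Proof. unfold dot, vzero. apply sumR_zero. intros; ring. Qed.

Lemma dot_block n off len f s : (off + len <= n)%nat ->
  dot n (block off len f) s = sumR len (fun m => f m * s (off + m)%nat).
Proof.
  intros H. unfold dot, block. replace n with (off + (len + (n - off - len)))%nat by lia.
  rewrite !sumR_add. rewrite sumR_zero.
  2:{ intros i Hi. destruct (Nat.leb_spec off i); [lia|]. simpl. ring. }
  rewrite (sumR_zero (n - off - len)).
  2:{ intros i Hi. destruct (Nat.leb_spec off (off + (len + i))); [|lia].
      destruct (Nat.ltb_spec (off + (len + i)) (off + len)); [lia|]. simpl. ring. }
  rewrite (sumR_ext len _ (fun m => f m * s (off + m)%nat)). ring.
  intros i Hi. destruct (Nat.leb_spec off (off + i)); [|lia].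
  destruct (Nat.ltb_spec (off + i) (off + len)); [|lia]. simpl. f_equal. f_equal. lia.
Qed.

(* A unit is evaluated by a column of [2N + 8] neurons, one layer per kind
   below, each neuron being a [row] (weights on the previous layer, bias).
   Neuron 0 carries the input and neuron 1 the weighted sum of the finished
   units.  Neurons 2-3 hold [relu v] and [relu (-v)] for the current value [v]:
   the partly folded position ([Fold]), the position ([Prep], [Stage], where
   4-5 do the same for the partial fit) or the ternary remainder ([Extract]).
   The other neurons hold the ReLU pieces being combined: the next tooth of the
   position (4-5 in [Fold k]), the zigzag and ramps of grid stage [k]
   ([Prep k]), the terms of [pick] ([Stage k]), and in [Extract k] the digit
   pieces (4-5), the selector ramps (6-9) and the gate of digit [k - 1]
   (10-13).  [Flush] and [Collect] add the last gate; [Idle] layers copy. *)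
Inductive layer_kind := Fold (k : nat) | Prep (k : nat) | Stage (k : nat) | Extract (k : nat) | Flush | Collect | Idle.

Definition kind_of (M NS l : nat) : layer_kind :=
  if Nat.ltb l M then Fold l
  else if Nat.ltb l (M + 2 * NS) then
    (if Nat.even (l - M) then Prep ((l - M) / 2) else Stage ((l - M) / 2))
  else if Nat.ltb l (2 * M + 2 * NS) then Extract (l - M - 2 * NS)
  else if Nat.eqb l (2 * M + 2 * NS) then Flush
  else if Nat.eqb l (2 * M + 2 * NS + 1) then Collect else Idle.

Definition row := ((nat -> R) * R)%type.

Section Rows.
Variables N NS M : nat.
Variable be : nat -> bool.
Variable wt : R.

Let sl := seg_len N NS.
Let bl := block_len N.
Let codes := code N NS M be.
Definition incr_diff (k j m : nat) := block_incr N codes k j (S m) - block_incr N codes k j m.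

Definition row_zero : row := (vzero, 0).
Definition row_copy (k : nat) : row := (single k 1, 0).
Definition gate_comb := vadd (single 10 1) (vadd (single 11 (-1)) (vadd (single 12 (-1)) (single 13 1))).
Definition row_accum : row := (vadd (single 1 1) (vscale wt gate_comb), 0).
Definition pick_comb := vadd (block 6 N (fun _ => 1)) (vadd (block (6 + N) N (fun _ => -1))
                     (vadd (single (6 + 2 * N) (-1)) (single (7 + 2 * N) 1))).
Definition zigzag_comb := vadd (block 6 N (fun m => 2 * (-1) ^ m)) (block (6 + N) N (fun m => -2 * (-1) ^ m)).
Definition fold_comb (k : nat) := vadd (single 2 1) (vadd (single 3 (-1)) (vscale ((-1) ^ (k - 1)) (vadd (single 4 1) (single 5 (-1))))).
Definition pos_comb := vadd (single 2 1) (single 3 (-1)).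
Definition fit_comb := vadd (single 4 1) (vadd (single 5 (-1)) pick_comb).
Definition seg_comb (k j : nat) := vadd (block 6 N (fun m => if Nat.eqb m 0 then 0 else - incr_diff k j (m - 1)))
                               (block (6 + N) N (fun m => if Nat.ltb m (N - 1) then incr_diff k j m else 0)).
Definition shift_comb := vadd (vscale 3 pos_comb) (vscale (-2) (vadd (single 4 1) (single 5 (-1)))).
Definition digit_comb := vadd (single 4 1) (single 5 (-1)).
Definition selector_comb := vadd (vadd (single 6 1) (single 7 (-1))) (vadd (single 8 1) (single 9 (-1))).
Definition row_gate (o : nat) : row :=
  if Nat.eqb o 10 then (vadd digit_comb (vscale (-1) selector_comb), 1)
  else if Nat.eqb o 11 then (vadd digit_comb (vscale (-1) selector_comb), 0)
  else if Nat.eqb o 12 then (vscale (-1) selector_comb, 1)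
  else (vscale (-1) selector_comb, 0).
Definition row_neg (r : row) : row := (vscale (-1) (fst r), - snd r).

Definition row_fold (k o : nat) : row :=
  if Nat.eqb o 0 then row_copy 0
  else if Nat.eqb o 1 then row_copy 1
  else if Nat.eqb o 2 then (if Nat.eqb k 0 then row_zero else (fold_comb k, 0))
  else if Nat.eqb o 3 then (if Nat.eqb k 0 then row_zero else row_neg (fold_comb k, 0))
  else if Nat.eqb o 4 then (single 0 1, - (INR k * INR sl))
  else if Nat.eqb o 5 then (single 0 1, - (INR k * INR sl) - (INR sl - 1))
  else row_zero.

Definition pos_comb_at (k : nat) := if Nat.eqb k 0 then fold_comb M else pos_comb.
Definition fit_comb_at (k : nat) := if Nat.eqb k 0 then vzero else fit_comb.

Definition row_prep (k o : nat) : row :=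
  if Nat.eqb o 0 then row_copy 0
  else if Nat.eqb o 1 then row_copy 1
  else if Nat.eqb o 2 then (pos_comb_at k, 0)
  else if Nat.eqb o 3 then row_neg (pos_comb_at k, 0)
  else if Nat.eqb o 4 then (fit_comb_at k, 0)
  else if Nat.eqb o 5 then row_neg (fit_comb_at k, 0)
  else if Nat.ltb o (6 + N) then (pos_comb_at k, - INR (k * bl) - INR (o - 6) * INR N)
  else if Nat.ltb o (6 + 2 * N) then (pos_comb_at k, - INR (k * bl) - INR (o - 6 - N) * INR N - (INR N - 1))
  else row_zero.

Definition row_stage (k o : nat) : row :=
  if Nat.eqb o 0 then row_copy 0
  else if Nat.eqb o 1 then row_copy 1
  else if Nat.eqb o 2 then row_copy 2
  else if Nat.eqb o 3 then row_copy 3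
  else if Nat.eqb o 4 then row_copy 4
  else if Nat.eqb o 5 then row_copy 5
  else if Nat.ltb o (6 + N) then (vadd (seg_comb k (o - 6)) zigzag_comb, block_incr N codes k (o - 6) 0 - 2 * INR (o - 6) + 1)
  else if Nat.ltb o (6 + 2 * N) then (vadd (seg_comb k (o - 6 - N)) zigzag_comb, block_incr N codes k (o - 6 - N) 0 - 2 * INR (o - 6 - N) - 1)
  else if Nat.eqb o (6 + 2 * N) then (zigzag_comb, 1)
  else if Nat.eqb o (7 + 2 * N) then (zigzag_comb, - 2 * INR N + 1)
  else row_zero.

Definition shift_row_at (k : nat) : row := if Nat.eqb k 0 then (fit_comb, codes 0%nat) else (shift_comb, 0).

Definition row_extract (k o : nat) : row :=
  if Nat.eqb o 0 then row_copy 0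
  else if Nat.eqb o 1 then (if Nat.eqb k 0 then row_copy 1 else row_accum)
  else if Nat.eqb o 2 then shift_row_at k
  else if Nat.eqb o 3 then row_neg (shift_row_at k)
  else if Nat.eqb o 4 then (vscale 3 (fst (shift_row_at k)), 3 * snd (shift_row_at k) - 1)
  else if Nat.eqb o 5 then (vscale 3 (fst (shift_row_at k)), 3 * snd (shift_row_at k) - 2)
  else if Nat.eqb o 6 then (single 0 1, - (INR k * INR sl) + 1)
  else if Nat.eqb o 7 then (single 0 1, - (INR k * INR sl))
  else if Nat.eqb o 8 then (single 0 1, - (INR (S k) * INR sl) + 1)
  else if Nat.eqb o 9 then (single 0 1, - (INR (S k) * INR sl))
  else if andb (Nat.leb 10 o) (Nat.leb o 13) then (if Nat.eqb k 0 then row_zero else row_gate o)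
  else row_zero.

Definition row_flush (o : nat) : row :=
  if Nat.eqb o 0 then row_copy 0
  else if Nat.eqb o 1 then row_accum
  else if andb (Nat.leb 10 o) (Nat.leb o 13) then row_gate o
  else row_zero.

Definition row_collect (o : nat) : row :=
  if Nat.eqb o 0 then row_copy 0
  else if Nat.eqb o 1 then row_accum
  else row_zero.

Definition row_idle (o : nat) : row :=
  if Nat.eqb o 0 then row_copy 0
  else if Nat.eqb o 1 then row_copy 1
  else row_zero.

Definition row_of (kd : layer_kind) (o : nat) : row :=
  match kd with
  | Fold k => row_fold k o | Prep k => row_prep k o | Stage k => row_stage k o | Extract k => row_extract k o
  | Flush => row_flush o | Collect => row_collect o | Idle => row_idle o
  end.

Variables inp acc0 : R.
Definition pos := unit_pos N NS M inp.
Definition fit_partial (k : nat) := sumR k (fun k' => grid_fit N (block_incr N codes k') (pos - INR (k' * bl))).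
Definition code_val := code_fit N NS M be pos.
Definition digit_val (k : nat) := digit (shift3_iter k code_val).
Definition selector_val (k : nat) := selector N NS k inp.
Definition gate_val (k : nat) := bit_term N NS M be k inp.
Definition gate_neuron (k o : nat) : R :=
  if Nat.eqb o 10 then relu (digit_val k - selector_val k)
  else if Nat.eqb o 11 then relu (digit_val k - selector_val k - 1)
  else if Nat.eqb o 12 then relu (- selector_val k)
  else relu (- selector_val k - 1).

Definition state_fold (k o : nat) : R :=
  if Nat.eqb o 0 then inp
  else if Nat.eqb o 1 then acc0
  else if Nat.eqb o 2 then relu (zigzag sl k inp)
  else if Nat.eqb o 3 then relu (- zigzag sl k inp)
  else if Nat.eqb o 4 then relu (inp - INR k * INR sl)
  else if Nat.eqb o 5 then relu (inp - INR k * INR sl - (INR sl - 1))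
  else 0.

Definition stage_arg (k : nat) := pos - INR (k * bl).

Definition state_prep (k o : nat) : R :=
  if Nat.eqb o 0 then inp
  else if Nat.eqb o 1 then acc0
  else if Nat.eqb o 2 then relu pos
  else if Nat.eqb o 3 then relu (- pos)
  else if Nat.eqb o 4 then relu (fit_partial k)
  else if Nat.eqb o 5 then relu (- fit_partial k)
  else if Nat.ltb o (6 + N) then relu (stage_arg k - INR (o - 6) * INR N)
  else if Nat.ltb o (6 + 2 * N) then relu (stage_arg k - INR (o - 6 - N) * INR N - (INR N - 1))
  else 0.

Definition state_stage (k o : nat) : R :=
  if Nat.eqb o 0 then inp
  else if Nat.eqb o 1 then acc0
  else if Nat.eqb o 2 then relu pos
  else if Nat.eqb o 3 then relu (- pos)
  else if Nat.eqb o 4 then relu (fit_partial k)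
  else if Nat.eqb o 5 then relu (- fit_partial k)
  else if Nat.ltb o (6 + N) then relu (seg_value N (block_incr N codes k) (o - 6) (stage_arg k) + 2 * (zigzag N N (stage_arg k) - INR (o - 6)) + 1)
  else if Nat.ltb o (6 + 2 * N) then relu (seg_value N (block_incr N codes k) (o - 6 - N) (stage_arg k) + 2 * (zigzag N N (stage_arg k) - INR (o - 6 - N)) - 1)
  else if Nat.eqb o (6 + 2 * N) then relu (2 * zigzag N N (stage_arg k) + 1)
  else if Nat.eqb o (7 + 2 * N) then relu (2 * zigzag N N (stage_arg k) - 2 * INR N + 1)
  else 0.

Definition state_extract (k o : nat) : R :=
  if Nat.eqb o 0 then inp
  else if Nat.eqb o 1 then acc0 + wt * sumR (k - 1) gate_val
  else if Nat.eqb o 2 then relu (shift3_iter k code_val)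
  else if Nat.eqb o 3 then relu (- shift3_iter k code_val)
  else if Nat.eqb o 4 then relu (3 * shift3_iter k code_val - 1)
  else if Nat.eqb o 5 then relu (3 * shift3_iter k code_val - 2)
  else if Nat.eqb o 6 then relu (inp - INR k * INR sl + 1)
  else if Nat.eqb o 7 then relu (inp - INR k * INR sl)
  else if Nat.eqb o 8 then relu (inp - INR (S k) * INR sl + 1)
  else if Nat.eqb o 9 then relu (inp - INR (S k) * INR sl)
  else if andb (Nat.leb 10 o) (Nat.leb o 13) then (if Nat.eqb k 0 then 0 else gate_neuron (k - 1) o)
  else 0.

Definition state_flush (o : nat) : R :=
  if Nat.eqb o 0 then inp
  else if Nat.eqb o 1 then acc0 + wt * sumR (M - 1) gate_val
  else if andb (Nat.leb 10 o) (Nat.leb o 13) then gate_neuron (M - 1) o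
  else 0.

Definition state_collect (o : nat) : R :=
  if Nat.eqb o 0 then inp
  else if Nat.eqb o 1 then acc0 + wt * sumR M gate_val
  else 0.

Definition state_of (kd : layer_kind) (o : nat) : R :=
  match kd with
  | Fold k => state_fold k o | Prep k => state_prep k o | Stage k => state_stage k o | Extract k => state_extract k o
  | Flush => state_flush o | Collect => state_collect o | Idle => state_collect o
  end.
End Rows.

Lemma sumR_pair_shift N e f (d : nat -> R) : (1 <= N)%nat ->
  sumR N (fun m => (if Nat.eqb m 0 then 0 else - d (m - 1)%nat) * e m)
  + sumR N (fun m => (if Nat.ltb m (N - 1) then d m else 0) * f m)
  = sumR (N - 1) (fun m => d m * (f m - e (S m))).
Proof.
  intros HN. destruct N as [|N']; [lia|]. replace (S N' - 1)%nat with N' by lia.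
  rewrite sumR_shift. simpl sumR at 2.
  rewrite (sumR_ext N' (fun i => (if Nat.eqb (S i) 0 then 0 else - d (S i - 1)%nat) * e (S i)) (fun i => - d i * e (S i))).
  2:{ intros i Hi. simpl. replace (i - 0)%nat with i by lia. reflexivity. }
  rewrite (sumR_ext N' (fun m => (if Nat.ltb m N' then d m else 0) * f m) (fun m => d m * f m)).
  2:{ intros i Hi. destruct (Nat.ltb_spec i N'); [reflexivity|lia]. }
  destruct (Nat.ltb_spec N' N'); [lia|].
  replace (sumR N' (fun m => d m * (f m - e (S m)))) with (sumR N' (fun m => d m * f m) + sumR N' (fun i => - d i * e (S i))).
  - simpl. ring.
  - rewrite <- sumR_plus. apply sumR_ext. intros; ring.
Qed.

Ltac ocases o :=
  repeat match goal with
  | |- context [Nat.eqb o ?n] => destruct (Nat.eqb_spec o n); [subst o|]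
  end.

Ltac regsolve := repeat match goal with
  | |- context [Nat.eqb ?a ?b] => destruct (Nat.eqb_spec a b); try lia
  | |- context [Nat.ltb ?a ?b] => destruct (Nat.ltb_spec a b); try lia
  | |- context [Nat.leb ?a ?b] => destruct (Nat.leb_spec a b); try lia
  end.

Section Steps.
Variables N NS M : nat.
Hypothesis HN : (3 <= N)%nat.
Hypothesis HNS : (1 <= NS)%nat.
Hypothesis HM : (1 <= M)%nat.
Variable be : nat -> bool.
Variable wt : R.
Variables inp acc0 : R.
Hypothesis Hinp : 0 <= inp.
Hypothesis Hacc0 : 0 <= acc0.
Hypothesis Hwt : 0 <= wt.

Let w := (2 * N + 8)%nat.
Ltac dotsimp := repeat (rewrite ?dot_vadd, ?dot_vscale, ?dot_vzero; try (rewrite dot_single by (unfold w; lia))).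

Definition state_is (kd : layer_kind) (s : nat -> R) := forall o, (o < w)%nat -> s o = state_of N NS M be wt inp acc0 kd o.

Definition layer_step (kd : layer_kind) (s : nat -> R) (o : nat) :=
  relu (dot w (fst (row_of N NS M be wt kd o)) s + snd (row_of N NS M be wt kd o)).

Lemma step_fold0 s : s 0%nat = inp -> s 1%nat = acc0 -> state_is (Fold 0) (layer_step (Fold 0) s).
Proof.
  intros H0 H1 o Ho. unfold layer_step, row_of, state_of, row_fold, state_fold. ocases o; simpl fst; simpl snd; dotsimp; rewrite ?H0, ?H1.
  all: try (unfold row_copy, row_zero; simpl fst; simpl snd; dotsimp; rewrite ?H0, ?H1).
  all: unfold zigzag; simpl sumR; rewrite ?Rmult_0_l, ?Rmult_1_l, ?Rplus_0_r, ?Ropp_0.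
  all: try (rewrite relu_pos by lra; reflexivity).
  all: try (f_equal; ring).
  all: try (apply relu_neg; lra).
Qed.

Lemma fold_regs k s : state_is (Fold k) s ->
  s 0%nat = inp /\ s 1%nat = acc0 /\ s 2%nat = relu (zigzag (seg_len N NS) k inp) /\ s 3%nat = relu (- zigzag (seg_len N NS) k inp) /\
  s 4%nat = relu (inp - INR k * INR (seg_len N NS)) /\ s 5%nat = relu (inp - INR k * INR (seg_len N NS) - (INR (seg_len N NS) - 1)).
Proof. intros H. repeat split; rewrite H by (unfold w; lia); reflexivity. Qed.

Lemma step_fold k s : (1 <= k)%nat -> state_is (Fold (k - 1)) s -> state_is (Fold k) (layer_step (Fold k) s).
Proof.
  intros Hk Hs. destruct (fold_regs _ _ Hs) as (R0 & R1 & R2 & R3 & R4 & R5).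
  intros o Ho. unfold layer_step, row_of, state_of, row_fold, state_fold. destruct (Nat.eqb_spec k 0); [lia|].
  ocases o; unfold row_copy, row_zero, row_neg, fold_comb; simpl fst; simpl snd; dotsimp; rewrite ?R0, ?R1, ?R2, ?R3, ?R4, ?R5.
  all: rewrite ?Rmult_0_l, ?Rmult_1_l, ?Rplus_0_r, ?Ropp_0.
  all: try (rewrite relu_pos by lra; reflexivity).
  all: try (f_equal; ring).
  all: try (apply relu_neg; lra).
  all: f_equal; replace (zigzag (seg_len N NS) k inp) with (zigzag (seg_len N NS) (S (k - 1)) inp) by (f_equal; lia);
    rewrite zigzag_S; unfold tooth, clamp;
    rewrite (relu_split (zigzag (seg_len N NS) (k - 1) inp));
    replace (k - 1 + 1)%nat with k by lia; ring.
Qed.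

Lemma state_stage_plus k j : (j < N)%nat -> state_of N NS M be wt inp acc0 (Stage k) (6 + j) =
  relu (seg_value N (block_incr N (code N NS M be) k) j (stage_arg N NS M inp k) + 2 * (zigzag N N (stage_arg N NS M inp k) - INR j) + 1).
Proof. intros Hj. unfold state_of; cbv beta iota. unfold state_stage. regsolve. replace (6 + j - 6)%nat with j by lia. reflexivity. Qed.

Lemma state_stage_minus k j : (j < N)%nat -> state_of N NS M be wt inp acc0 (Stage k) (6 + N + j) =
  relu (seg_value N (block_incr N (code N NS M be) k) j (stage_arg N NS M inp k) + 2 * (zigzag N N (stage_arg N NS M inp k) - INR j) - 1).
Proof. intros Hj. unfold state_of; cbv beta iota. unfold state_stage. regsolve. replace (6 + N + j - 6 - N)%nat with j by lia. reflexivity. Qed.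

Lemma state_stage_lo k : state_of N NS M be wt inp acc0 (Stage k) (6 + 2 * N) = relu (2 * zigzag N N (stage_arg N NS M inp k) + 1).
Proof. unfold state_of; cbv beta iota. unfold state_stage. regsolve. all: try reflexivity. Qed.

Lemma state_stage_hi k : state_of N NS M be wt inp acc0 (Stage k) (7 + 2 * N) = relu (2 * zigzag N N (stage_arg N NS M inp k) - 2 * INR N + 1).
Proof. unfold state_of; cbv beta iota. unfold state_stage. regsolve. all: try reflexivity. Qed.

Lemma pick_comb_val k s : state_is (Stage k) s -> dot w (pick_comb N) s = grid_fit N (block_incr N (code N NS M be) k) (stage_arg N NS M inp k).
Proof.
  intros Hs. unfold pick_comb. rewrite !dot_vadd, !dot_block by (unfold w; lia). rewrite !dot_single by (unfold w; lia).
  rewrite Hs, state_stage_lo by (unfold w; lia). rewrite Hs, state_stage_hi by (unfold w; lia).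
  set (v := stage_arg N NS M inp k). set (Hk := block_incr N (code N NS M be) k).
  rewrite (sumR_ext N (fun m => 1 * s (6 + m)%nat)
    (fun m => relu (seg_value N Hk m v + 2 * (zigzag N N v - INR m) + 1))).
  2:{ intros i Hi. rewrite Hs by (unfold w; lia). rewrite state_stage_plus by auto. apply Rmult_1_l. }
  rewrite (sumR_ext N (fun m => -1 * s (6 + N + m)%nat)
    (fun m => -1 * relu (seg_value N Hk m v + 2 * (zigzag N N v - INR m) - 1))).
  2:{ intros i Hi. rewrite Hs by (unfold w; lia). rewrite state_stage_minus by auto. reflexivity. }
  unfold grid_fit, pick. rewrite sumR_minus, sumR_scal. ring.
Qed.

Lemma fit_regs kd k s : (kd = Prep k \/ kd = Stage k) -> state_is kd s ->
  s 0%nat = inp /\ s 1%nat = acc0 /\ s 2%nat = relu (pos N NS M inp) /\ s 3%nat = relu (- pos N NS M inp) /\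
  s 4%nat = relu (fit_partial N NS M be inp k) /\ s 5%nat = relu (- fit_partial N NS M be inp k).
Proof. intros [-> | ->] H; repeat split; rewrite H by (unfold w; lia); reflexivity. Qed.

Lemma fit_partial_S k : fit_partial N NS M be inp (S k) = fit_partial N NS M be inp k + grid_fit N (block_incr N (code N NS M be) k) (pos N NS M inp - INR (k * block_len N)).
Proof. reflexivity. Qed.

Lemma step_prep k s : (k < NS)%nat -> ((k = 0)%nat -> state_is (Fold (M - 1)) s) -> ((1 <= k)%nat -> state_is (Stage (k - 1)) s) ->
  state_is (Prep k) (layer_step (Prep k) s).
Proof.
  intros Hk HF HB.
  assert (U : dot w (pos_comb_at M k) s = pos N NS M inp /\ dot w (fit_comb_at N k) s = fit_partial N NS M be inp k).
  { unfold pos_comb_at, fit_comb_at. destruct (Nat.eqb_spec k 0) as [E|E].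
    - destruct (fold_regs _ _ (HF E)) as (R0 & R1 & R2 & R3 & R4 & R5). subst k. split.
      + unfold fold_comb. dotsimp. rewrite R2, R3, R4, R5.
        unfold pos, unit_pos.  replace (zigzag (seg_len N NS) M inp) with (zigzag (seg_len N NS) (S (M - 1)) inp) by (f_equal; lia).
        rewrite zigzag_S. unfold tooth, clamp. rewrite (relu_split (zigzag (seg_len N NS) (M - 1) inp)). ring.
      + rewrite dot_vzero. unfold fit_partial. reflexivity.
    - pose proof (HB ltac:(lia)) as Hs. destruct k as [|k']; [lia|]. replace (S k' - 1)%nat with k' in Hs by lia.
      destruct (fit_regs _ _ _ (or_intror eq_refl) Hs) as (R0 & R1 & R2 & R3 & R4 & R5). split.
      + unfold pos_comb. dotsimp. rewrite R2, R3. rewrite (relu_split (pos N NS M inp)). ring.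
      + unfold fit_comb. rewrite !dot_vadd. rewrite (pick_comb_val _ _ Hs). dotsimp. rewrite R4, R5.
        unfold fit_partial at 2. simpl sumR. fold (fit_partial N NS M be inp k').
        unfold stage_arg. rewrite (relu_split (fit_partial N NS M be inp k')). rewrite fit_partial_S. ring. }
  destruct U as [U TH].
  assert (S01 : s 0%nat = inp /\ s 1%nat = acc0).
  { destruct k as [|k']. destruct (fold_regs _ _ (HF eq_refl)) as (R0 & R1 & _); auto.
    destruct (fit_regs _ _ _ (or_intror eq_refl) (HB ltac:(lia))) as (R0 & R1 & _); auto. }
  destruct S01 as [S0 S1].
  intros o Ho. unfold layer_step, row_of, state_of, row_prep, state_prep, stage_arg.
  regsolve; unfold row_copy, row_neg; simpl fst; simpl snd; rewrite ?dot_vscale, ?U, ?TH.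
  all: try dotsimp.
  all: rewrite ?S0, ?S1, ?Rplus_0_r, ?Ropp_0, ?Rplus_0_r, ?Rmult_1_l.
  all: try (rewrite relu_pos by lra; reflexivity).
  all: try (f_equal; ring).
  all: try (apply relu_neg; lra).
Qed.

Lemma state_prep_lo k m : (m < N)%nat -> state_of N NS M be wt inp acc0 (Prep k) (6 + m) = relu (stage_arg N NS M inp k - INR m * INR N).
Proof. intros Hm. unfold state_of; cbv beta iota. unfold state_prep. regsolve. replace (6 + m - 6)%nat with m by lia. unfold stage_arg. try (f_equal; ring). Qed.

Lemma state_prep_hi k m : (m < N)%nat -> state_of N NS M be wt inp acc0 (Prep k) (6 + N + m) = relu (stage_arg N NS M inp k - INR m * INR N - (INR N - 1)).
Proof. intros Hm. unfold state_of; cbv beta iota. unfold state_prep. regsolve. replace (6 + N + m - 6 - N)%nat with m by lia. unfold stage_arg. try (f_equal; ring). Qed.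

Lemma zigzag_comb_val k s : state_is (Prep k) s -> dot w (zigzag_comb N) s = 2 * zigzag N N (stage_arg N NS M inp k).
Proof.
  intros Hs. unfold zigzag_comb. rewrite dot_vadd, !dot_block by (unfold w; lia).
  rewrite (sumR_ext N (fun m => 2 * (-1) ^ m * s (6 + m)%nat) (fun m => 2 * ((-1) ^ m * relu (stage_arg N NS M inp k - INR m * INR N)))).
  2:{ intros i Hi. rewrite Hs, state_prep_lo by (unfold w; lia). ring. }
  rewrite (sumR_ext N (fun m => -2 * (-1) ^ m * s (6 + N + m)%nat) (fun m => -2 * ((-1) ^ m * relu (stage_arg N NS M inp k - INR m * INR N - (INR N - 1))))).
  2:{ intros i Hi. rewrite Hs, state_prep_hi by (unfold w; lia). ring. }
  rewrite !sumR_scal. unfold zigzag, tooth, clamp.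
  rewrite (sumR_ext N (fun k0 => (-1) ^ k0 * (relu (stage_arg N NS M inp k - INR k0 * INR N) - relu (stage_arg N NS M inp k - INR k0 * INR N - (INR N - 1))))
     (fun k0 => (-1) ^ k0 * relu (stage_arg N NS M inp k - INR k0 * INR N) - (-1) ^ k0 * relu (stage_arg N NS M inp k - INR k0 * INR N - (INR N - 1)))) by (intros; ring).
  rewrite sumR_minus. ring.
Qed.

Lemma seg_comb_val k j s : state_is (Prep k) s ->
  dot w (seg_comb N NS M be k j) s = seg_value N (block_incr N (code N NS M be) k) j (stage_arg N NS M inp k) - block_incr N (code N NS M be) k j 0.
Proof.
  intros Hs. unfold seg_comb. rewrite dot_vadd, !dot_block by (unfold w; lia).
  set (v := stage_arg N NS M inp k).
  rewrite (sumR_ext N (fun m => (if Nat.eqb m 0 then 0 else - incr_diff N NS M be k j (m - 1)) * s (6 + m)%nat)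
    (fun m => (if Nat.eqb m 0 then 0 else - incr_diff N NS M be k j (m - 1)) * relu (v - INR m * INR N))).
  2:{ intros i Hi. rewrite Hs, state_prep_lo by (unfold w; lia). reflexivity. }
  rewrite (sumR_ext N (fun m => (if Nat.ltb m (N - 1) then incr_diff N NS M be k j m else 0) * s (6 + N + m)%nat)
    (fun m => (if Nat.ltb m (N - 1) then incr_diff N NS M be k j m else 0) * relu (v - INR m * INR N - (INR N - 1)))).
  2:{ intros i Hi. rewrite Hs, state_prep_hi by (unfold w; lia). reflexivity. }
  rewrite (sumR_pair_shift N (fun m => relu (v - INR m * INR N)) (fun m => relu (v - INR m * INR N - (INR N - 1))) (incr_diff N NS M be k j)) by lia.
  unfold seg_value. ring_simplify. apply sumR_ext. intros m Hm. unfold incr_diff, clamp. f_equal.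
  rewrite S_INR. f_equal; f_equal; ring.
Qed.

Lemma step_stage k s : state_is (Prep k) s -> state_is (Stage k) (layer_step (Stage k) s).
Proof.
  intros Hs. destruct (fit_regs _ _ _ (or_introl eq_refl) Hs) as (R0 & R1 & R2 & R3 & R4 & R5).
  intros o Ho. unfold layer_step, row_of, state_of, row_stage, state_stage.
  regsolve; unfold row_copy, row_zero; simpl fst; simpl snd; dotsimp;
    rewrite ?R0, ?R1, ?R2, ?R3, ?R4, ?R5, ?Rmult_1_l, ?Rplus_0_r, ?relu_id.
  all: try (rewrite relu_pos by lra; reflexivity).
  all: try reflexivity.
  all: try (rewrite (zigzag_comb_val _ _ Hs); f_equal; ring).
  all: try (apply relu_neg; lra).
  all: rewrite (seg_comb_val _ _ _ Hs), (zigzag_comb_val _ _ Hs); f_equal; ring.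
Qed.

Lemma gate_neuron_sum q : gate_neuron N NS M be inp q 10 - gate_neuron N NS M be inp q 11 - gate_neuron N NS M be inp q 12 + gate_neuron N NS M be inp q 13
  = gate_val N NS M be inp q.
Proof. unfold gate_neuron, gate_val, bit_term, gate, clamp, digit_val, selector_val, code_val, pos. simpl. ring. Qed.

Lemma gate_val_nonneg q : 0 <= gate_val N NS M be inp q.
Proof. unfold gate_val, bit_term. apply gate_nonneg. apply digit_range. Qed.

Lemma sumR_gate_val_nonneg q : 0 <= sumR q (gate_val N NS M be inp).
Proof. induction q; simpl. lra. pose proof (gate_val_nonneg q). lra. Qed.

Lemma row_accum_val s q g : s 1%nat = acc0 + wt * sumR q (gate_val N NS M be inp) ->
  s 10%nat - s 11%nat - s 12%nat + s 13%nat = g -> 0 <= g ->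
  relu (dot w (fst (row_accum wt)) s + snd (row_accum wt)) = acc0 + wt * (sumR q (gate_val N NS M be inp) + g).
Proof.
  intros H1 Hg Hg0. unfold row_accum, gate_comb. cbn [fst snd]. dotsimp. rewrite H1.
  match goal with |- relu ?e = _ => replace e with
    (acc0 + wt * (sumR q (gate_val N NS M be inp) + (s 10%nat - s 11%nat - s 12%nat + s 13%nat))) by ring end.
  rewrite Hg. apply relu_pos. pose proof (sumR_gate_val_nonneg q). nra.
Qed.

Lemma extract_regs k s : state_is (Extract k) s ->
  s 0%nat = inp /\ s 1%nat = acc0 + wt * sumR (k - 1) (gate_val N NS M be inp) /\
  s 2%nat = relu (shift3_iter k (code_val N NS M be inp)) /\ s 3%nat = relu (- shift3_iter k (code_val N NS M be inp)) /\
  s 4%nat = relu (3 * shift3_iter k (code_val N NS M be inp) - 1) /\ s 5%nat = relu (3 * shift3_iter k (code_val N NS M be inp) - 2) /\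
  s 6%nat = relu (inp - INR k * INR (seg_len N NS) + 1) /\ s 7%nat = relu (inp - INR k * INR (seg_len N NS)) /\
  s 8%nat = relu (inp - INR (S k) * INR (seg_len N NS) + 1) /\ s 9%nat = relu (inp - INR (S k) * INR (seg_len N NS)) /\
  s 10%nat - s 11%nat - s 12%nat + s 13%nat = (if Nat.eqb k 0 then 0 else gate_val N NS M be inp (k - 1)).
Proof. intros H. repeat split; try (rewrite H by (unfold w; lia); reflexivity).
  rewrite !H by (unfold w; lia). unfold state_of, state_extract. simpl. destruct (Nat.eqb_spec k 0). ring.
  apply gate_neuron_sum. Qed.

Lemma digit_relu x : relu (3 * x - 1) - relu (3 * x - 2) = digit x.
Proof. unfold digit, clamp. f_equal. f_equal. ring. Qed.

Lemma selector_relu k : (relu (inp - INR k * INR (seg_len N NS) + 1) - relu (inp - INR k * INR (seg_len N NS)))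
  + (relu (inp - INR (S k) * INR (seg_len N NS) + 1) - relu (inp - INR (S k) * INR (seg_len N NS))) - 1 = selector N NS k inp.
Proof. unfold selector, ramp, clamp. replace (inp - INR k * INR (seg_len N NS) + 1 - 1) with (inp - INR k * INR (seg_len N NS)) by ring.
  replace (inp - INR (S k) * INR (seg_len N NS) + 1 - 1) with (inp - INR (S k) * INR (seg_len N NS)) by ring. ring. Qed.

Lemma step_extract_gen k s :
  s 0%nat = inp ->
  dot w (fst (shift_row_at N NS M be k)) s + snd (shift_row_at N NS M be k) = shift3_iter k (code_val N NS M be inp) ->
  relu (dot w (fst (row_extract N NS M be wt k 1)) s + snd (row_extract N NS M be wt k 1)) = acc0 + wt * sumR (k - 1) (gate_val N NS M be inp) ->
  ((1 <= k)%nat -> dot w digit_comb s = digit (shift3_iter (k - 1) (code_val N NS M be inp)) /\ dot w selector_comb s = selector N NS (k - 1) inp + 1) ->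
  state_is (Extract k) (layer_step (Extract k) s).
Proof.
  intros S0 HX HACC HG o Ho. unfold layer_step. unfold row_of, state_of.
  destruct (Nat.eqb_spec o 1) as [E1|E1]. { subst o. rewrite HACC. unfold state_extract. simpl. reflexivity. }
  unfold row_extract, state_extract.
  destruct (Nat.eqb_spec o 0). { subst o. cbv beta iota. unfold row_copy. cbn [fst snd]. dotsimp. rewrite S0. rewrite relu_pos by lra. ring. }
  destruct (Nat.eqb_spec o 1); [lia|].
  destruct (Nat.eqb_spec o 2). { cbv beta iota. rewrite HX. reflexivity. }
  destruct (Nat.eqb_spec o 3). { cbv beta iota. unfold row_neg. cbn [fst snd]. rewrite dot_vscale. f_equal. rewrite <- HX. ring. }
  destruct (Nat.eqb_spec o 4). { cbv beta iota. cbn [fst snd]. rewrite dot_vscale. f_equal. rewrite <- HX. ring. }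
  destruct (Nat.eqb_spec o 5). { cbv beta iota. cbn [fst snd]. rewrite dot_vscale. f_equal. rewrite <- HX. ring. }
  destruct (Nat.eqb_spec o 6). { cbv beta iota. cbn [fst snd]. dotsimp. rewrite S0. f_equal. ring. }
  destruct (Nat.eqb_spec o 7). { cbv beta iota. cbn [fst snd]. dotsimp. rewrite S0. f_equal. ring. }
  destruct (Nat.eqb_spec o 8). { cbv beta iota. cbn [fst snd]. dotsimp. rewrite S0. f_equal. ring. }
  destruct (Nat.eqb_spec o 9). { cbv beta iota. cbn [fst snd]. dotsimp. rewrite S0. f_equal. ring. }
  destruct (Nat.leb_spec 10 o); destruct (Nat.leb_spec o 13); cbn [andb]; cbv beta iota;
    try (unfold row_zero; cbn [fst snd]; rewrite dot_vzero; apply relu_neg; lra).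
  destruct (Nat.eqb_spec k 0). { cbv beta iota. unfold row_zero; cbn [fst snd]; rewrite dot_vzero; apply relu_neg; lra. }
  cbv beta iota. destruct (HG ltac:(lia)) as [HB HC].
  assert (o = 10 \/ o = 11 \/ o = 12 \/ o = 13)%nat as Ho' by lia.
  unfold row_gate, gate_neuron, digit_val, selector_val.
  destruct Ho' as [E|[E|[E|E]]]; subst o; cbn [Nat.eqb fst snd]; rewrite ?dot_vadd, ?dot_vscale, ?HB, ?HC; f_equal; ring.
Qed.

Lemma step_extract0 s : state_is (Stage (NS - 1)) s -> state_is (Extract 0) (layer_step (Extract 0) s).
Proof.
  intros Hs. destruct (fit_regs _ _ _ (or_intror eq_refl) Hs) as (R0 & R1 & R2 & R3 & R4 & R5).
  apply step_extract_gen; auto.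
  - unfold shift_row_at. simpl Nat.eqb. cbv beta iota. cbn [fst snd]. unfold fit_comb. rewrite !dot_vadd, (pick_comb_val _ _ Hs).
    dotsimp. rewrite R4, R5. simpl shift3_iter. unfold code_val, code_fit, chain_fit.
    rewrite (relu_split (fit_partial N NS M be inp (NS - 1))).
    rewrite (sumR_last NS) by lia. unfold stage_arg, fit_partial, pos. ring.
  - unfold row_extract. simpl Nat.eqb. cbv beta iota. unfold row_copy. cbn [fst snd]. dotsimp. rewrite R1. simpl sumR.
    rewrite relu_pos by lra. ring.
  - intros; lia.
Qed.

Lemma step_extract k s : state_is (Extract k) s -> state_is (Extract (S k)) (layer_step (Extract (S k)) s).
Proof.
  intros Hs. destruct (extract_regs _ _ Hs) as (R0 & R1 & R2 & R3 & R4 & R5 & R6 & R7 & R8 & R9 & RG).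
  apply step_extract_gen; auto.
  - unfold shift_row_at. simpl Nat.eqb. cbv beta iota. cbn [fst snd]. unfold shift_comb, pos_comb. dotsimp.
    rewrite R2, R3, R4, R5. simpl shift3_iter. unfold shift3, digit.
    rewrite (relu_split (shift3_iter k (code_val N NS M be inp))). unfold clamp.
    replace (3 * shift3_iter k (code_val N NS M be inp) - 1 - 1) with (3 * shift3_iter k (code_val N NS M be inp) - 2) by ring. ring.
  - unfold row_extract. simpl Nat.eqb. cbv beta iota.
    rewrite (row_accum_val s (k - 1) _ R1 RG) by (destruct (Nat.eqb_spec k 0); [lra | apply gate_val_nonneg]).
    destruct (Nat.eqb_spec k 0) as [->|Hk]; [simpl; ring|].
    replace (S k - 1)%nat with (S (k - 1)) by lia. reflexivity.
  - intros _. split.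
    + unfold digit_comb. dotsimp. rewrite R4, R5. rewrite <- digit_relu. replace (S k - 1)%nat with k by lia. ring.
    + unfold selector_comb. dotsimp. rewrite R6, R7, R8, R9. replace (S k - 1)%nat with k by lia. rewrite <- (selector_relu k). ring.
Qed.

Lemma step_flush s : state_is (Extract (M - 1)) s -> state_is Flush (layer_step Flush s).
Proof.
  intros Hs. destruct (extract_regs _ _ Hs) as (R0 & R1 & R2 & R3 & R4 & R5 & R6 & R7 & R8 & R9 & RG).
  intros o Ho. unfold layer_step, row_of, state_of, row_flush, state_flush.
  destruct (Nat.eqb_spec o 0). { subst o. cbv beta iota. unfold row_copy. cbn [fst snd]. dotsimp. rewrite R0. rewrite relu_pos by lra. ring. }
  destruct (Nat.eqb_spec o 1).
  { cbv beta iota.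
    rewrite (row_accum_val s (M - 1 - 1) _ R1 RG) by (destruct (Nat.eqb_spec (M - 1) 0); [lra | apply gate_val_nonneg]).
    destruct (Nat.eqb_spec (M - 1) 0) as [E0|E0]; [rewrite E0; simpl; ring|].
    rewrite (sumR_last (M - 1)) by lia. reflexivity. }
  destruct (Nat.leb_spec 10 o); destruct (Nat.leb_spec o 13); cbn [andb]; cbv beta iota;
    try (unfold row_zero; cbn [fst snd]; rewrite dot_vzero; apply relu_neg; lra).
  assert (HB : dot w digit_comb s = digit (shift3_iter (M - 1) (code_val N NS M be inp))) by (unfold digit_comb; dotsimp; rewrite R4, R5; rewrite <- digit_relu; ring).
  assert (HC : dot w selector_comb s = selector N NS (M - 1) inp + 1).
  { unfold selector_comb. dotsimp. rewrite R6, R7, R8, R9. rewrite <- (selector_relu (M - 1)). ring. }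
  assert (o = 10 \/ o = 11 \/ o = 12 \/ o = 13)%nat as Ho' by lia.
  unfold row_gate, gate_neuron, digit_val, selector_val.
  destruct Ho' as [E|[E|[E|E]]]; subst o; cbn [Nat.eqb fst snd]; rewrite ?dot_vadd, ?dot_vscale, ?HB, ?HC; f_equal; ring.
Qed.

Lemma step_collect s : state_is Flush s -> state_is Collect (layer_step Collect s).
Proof.
  intros Hs.
  assert (R0 : s 0%nat = inp) by (rewrite Hs by (unfold w; lia); reflexivity).
  assert (R1 : s 1%nat = acc0 + wt * sumR (M - 1) (gate_val N NS M be inp)) by (rewrite Hs by (unfold w; lia); reflexivity).
  assert (RG : s 10%nat - s 11%nat - s 12%nat + s 13%nat = gate_val N NS M be inp (M - 1)).
  { rewrite !Hs by (unfold w; lia). unfold state_of, state_flush. simpl. apply gate_neuron_sum. }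
  intros o Ho. unfold layer_step, row_of, state_of, row_collect, state_collect.
  destruct (Nat.eqb_spec o 0). { subst o. cbv beta iota. unfold row_copy. cbn [fst snd]. dotsimp. rewrite R0. rewrite relu_pos by lra. ring. }
  destruct (Nat.eqb_spec o 1).
  { cbv beta iota. rewrite (row_accum_val s (M - 1) _ R1 RG) by apply gate_val_nonneg.
    rewrite (sumR_last M (gate_val N NS M be inp)) by lia. reflexivity. }
  cbv beta iota. unfold row_zero; cbn [fst snd]; rewrite dot_vzero; apply relu_neg; lra.
Qed.

Lemma step_idle kd s : (kd = Collect \/ kd = Idle) -> state_is kd s -> state_is Idle (layer_step Idle s).
Proof.
  intros Hk Hs.
  assert (R0 : s 0%nat = inp) by (rewrite Hs by (unfold w; lia); destruct Hk; subst; reflexivity).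
  assert (R1 : s 1%nat = acc0 + wt * sumR M (gate_val N NS M be inp)) by (rewrite Hs by (unfold w; lia); destruct Hk; subst; reflexivity).
  intros o Ho. unfold layer_step, row_of, state_of, row_idle, state_collect.
  destruct (Nat.eqb_spec o 0). { subst o. cbv beta iota. unfold row_copy. cbn [fst snd]. dotsimp. rewrite R0. rewrite relu_pos by lra. ring. }
  destruct (Nat.eqb_spec o 1).
  { subst o. cbv beta iota. unfold row_copy. cbn [fst snd]. dotsimp. rewrite R1. rewrite Rmult_1_l, Rplus_0_r.
    apply relu_pos. pose proof (sumR_gate_val_nonneg M). nra. }
  cbv beta iota. unfold row_zero; cbn [fst snd]; rewrite dot_vzero; apply relu_neg; lra.
Qed.
End Steps.

Section Kinds.
Variables M NS : nat.

Lemma kind_fold l : (l < M)%nat -> kind_of M NS l = Fold l.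
Proof. intros. unfold kind_of. destruct (Nat.ltb_spec l M); [reflexivity|lia]. Qed.

Lemma kind_prep k : (k < NS)%nat -> kind_of M NS (M + 2 * k) = Prep k.
Proof. intros. unfold kind_of. destruct (Nat.ltb_spec (M + 2 * k) M); [lia|].
  destruct (Nat.ltb_spec (M + 2 * k) (M + 2 * NS)); [|lia].
  replace (M + 2 * k - M)%nat with (k * 2)%nat by lia.
  replace (Nat.even (k * 2)) with true by (symmetry; apply Nat.even_spec; exists k; lia).
  rewrite Nat.div_mul by lia. reflexivity. Qed.

Lemma kind_stage k : (k < NS)%nat -> kind_of M NS (M + 2 * k + 1) = Stage k.
Proof. intros. unfold kind_of. destruct (Nat.ltb_spec (M + 2 * k + 1) M); [lia|].
  destruct (Nat.ltb_spec (M + 2 * k + 1) (M + 2 * NS)); [|lia].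
  replace (M + 2 * k + 1 - M)%nat with (1 + k * 2)%nat by lia.
  replace (Nat.even (1 + k * 2)) with false.
  2:{ symmetry. rewrite <- Nat.negb_odd. replace (Nat.odd (1 + k * 2)) with true. reflexivity. symmetry. apply Nat.odd_spec. exists k; lia. }
  rewrite Nat.div_add by lia. reflexivity. Qed.

Lemma kind_extract k : (k < M)%nat -> kind_of M NS (M + 2 * NS + k) = Extract k.
Proof. intros. unfold kind_of. destruct (Nat.ltb_spec (M + 2 * NS + k) M); [lia|].
  destruct (Nat.ltb_spec (M + 2 * NS + k) (M + 2 * NS)); [lia|].
  destruct (Nat.ltb_spec (M + 2 * NS + k) (2 * M + 2 * NS)); [|lia]. f_equal. lia. Qed.

Lemma kind_flush : kind_of M NS (2 * M + 2 * NS) = Flush.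
Proof. unfold kind_of. destruct (Nat.ltb_spec (2 * M + 2 * NS) M). lia.
  destruct (Nat.ltb_spec (2 * M + 2 * NS) (M + 2 * NS)). lia.
  destruct (Nat.ltb_spec (2 * M + 2 * NS) (2 * M + 2 * NS)). lia. rewrite Nat.eqb_refl. reflexivity. Qed.

Lemma kind_collect : kind_of M NS (2 * M + 2 * NS + 1) = Collect.
Proof. unfold kind_of. destruct (Nat.ltb_spec (2 * M + 2 * NS + 1) M). lia.
  destruct (Nat.ltb_spec (2 * M + 2 * NS + 1) (M + 2 * NS)). lia.
  destruct (Nat.ltb_spec (2 * M + 2 * NS + 1) (2 * M + 2 * NS)). lia.
  destruct (Nat.eqb_spec (2 * M + 2 * NS + 1) (2 * M + 2 * NS)). lia. rewrite Nat.eqb_refl. reflexivity. Qed.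

Lemma kind_idle l : (2 * M + 2 * NS + 2 <= l)%nat -> kind_of M NS l = Idle.
Proof. intros. unfold kind_of. destruct (Nat.ltb_spec l M). lia.
  destruct (Nat.ltb_spec l (M + 2 * NS)). lia.
  destruct (Nat.ltb_spec l (2 * M + 2 * NS)). lia.
  destruct (Nat.eqb_spec l (2 * M + 2 * NS)). lia. destruct (Nat.eqb_spec l (2 * M + 2 * NS + 1)). lia. reflexivity. Qed.

Lemma kind_cases l :
  (l < M /\ kind_of M NS l = Fold l)%nat \/
  (exists k, k < NS /\ l = M + 2 * k /\ kind_of M NS l = Prep k)%nat \/
  (exists k, k < NS /\ l = M + 2 * k + 1 /\ kind_of M NS l = Stage k)%nat \/
  (exists k, k < M /\ l = M + 2 * NS + k /\ kind_of M NS l = Extract k)%nat \/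
  (l = 2 * M + 2 * NS /\ kind_of M NS l = Flush)%nat \/
  (l = 2 * M + 2 * NS + 1 /\ kind_of M NS l = Collect)%nat \/
  (2 * M + 2 * NS + 2 <= l /\ kind_of M NS l = Idle)%nat.
Proof.
  destruct (Nat.lt_ge_cases l M). { left. split; auto. apply kind_fold; auto. }
  destruct (Nat.lt_ge_cases l (M + 2 * NS)).
  { set (d := (l - M)%nat). destruct (Nat.Even_or_Odd d) as [[k Hk]|[k Hk]].
    - right; left. exists k. assert (l = M + 2 * k)%nat by lia. repeat split; try lia. subst l. apply kind_prep. lia.
    - right; right; left. exists k. assert (l = M + 2 * k + 1)%nat by lia. repeat split; try lia. subst l. apply kind_stage. lia. }
  destruct (Nat.lt_ge_cases l (2 * M + 2 * NS)).
  { right; right; right; left. exists (l - M - 2 * NS)%nat. repeat split; try lia.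
    replace l with (M + 2 * NS + (l - M - 2 * NS))%nat at 1 by lia. apply kind_extract. lia. }
  destruct (Nat.eq_dec l (2 * M + 2 * NS)). { subst. do 4 right; left. split; auto. apply kind_flush. }
  destruct (Nat.eq_dec l (2 * M + 2 * NS + 1)). { subst. do 5 right; left. split; auto. apply kind_collect. }
  do 6 right. split; [lia|]. apply kind_idle. lia.
Qed.
End Kinds.

Section UnitIter.
Variables N NS M : nat.
Hypothesis HN : (3 <= N)%nat.
Hypothesis HNS : (1 <= NS)%nat.
Hypothesis HM : (1 <= M)%nat.
Variable be : nat -> bool.
Variable wt : R.
Variables inp acc0 : R.
Hypothesis Hinp : 0 <= inp.
Hypothesis Hacc0 : 0 <= acc0.
Hypothesis Hwt : 0 <= wt.

Lemma unit_step l s : state_is N NS M be wt inp acc0 (kind_of M NS l) s ->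
  state_is N NS M be wt inp acc0 (kind_of M NS (S l)) (layer_step N NS M be wt (kind_of M NS (S l)) s).
Proof.
  intros Hs. destruct (kind_cases M NS (S l)) as [[H1 H2]|[[k [H1 [H2 H3]]]|[[k [H1 [H2 H3]]]|[[k [H1 [H2 H3]]]|[[H1 H2]|[[H1 H2]|[H1 H2]]]]]]].
  - rewrite H2. rewrite kind_fold in Hs by lia. replace l with (S l - 1)%nat in Hs by lia. apply step_fold; auto; lia.
  - rewrite H3. apply step_prep; auto.
    + intros ->. rewrite kind_fold in Hs by lia. replace l with (M - 1)%nat in Hs by lia. auto.
    + intros Hk. replace l with (M + 2 * (k - 1) + 1)%nat in Hs by lia. rewrite kind_stage in Hs by lia. auto.
  - rewrite H3. apply step_stage; auto. replace l with (M + 2 * k)%nat in Hs by lia. rewrite kind_prep in Hs by lia. auto.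
  - rewrite H3. destruct k as [|k'].
    + apply step_extract0; auto. replace l with (M + 2 * (NS - 1) + 1)%nat in Hs by lia. rewrite kind_stage in Hs by lia. auto.
    + apply step_extract; auto. replace l with (M + 2 * NS + k')%nat in Hs by lia. rewrite kind_extract in Hs by lia. auto.
  - rewrite H2. apply step_flush; auto. replace l with (M + 2 * NS + (M - 1))%nat in Hs by lia. rewrite kind_extract in Hs by lia. auto.
  - rewrite H2. apply step_collect; auto. replace l with (2 * M + 2 * NS)%nat in Hs by lia. rewrite kind_flush in Hs. auto.
  - rewrite H2. destruct (Nat.eq_dec l (2 * M + 2 * NS + 1)).
    + apply (step_idle _ _ _ HN HNS HM be wt inp acc0 Hinp Hacc0 Hwt Collect); auto. subst l. rewrite kind_collect in Hs. auto.
    + apply (step_idle _ _ _ HN HNS HM be wt inp acc0 Hinp Hacc0 Hwt Idle); auto. rewrite kind_idle in Hs by lia. auto.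
Qed.

Lemma unit_last U s : (2 * M + 2 * NS + 2 <= U)%nat -> state_is N NS M be wt inp acc0 (kind_of M NS (U - 1)) s ->
  s 0%nat = inp /\ s 1%nat = acc0 + wt * bit_fn N NS M be inp.
Proof.
  intros HU Hs.
  assert (E : state_of N NS M be wt inp acc0 (kind_of M NS (U - 1)) = state_collect N NS M be wt inp acc0).
  { destruct (Nat.eq_dec (U - 1) (2 * M + 2 * NS + 1)) as [E|E].
    - rewrite E, kind_collect. reflexivity.
    - rewrite kind_idle by lia. reflexivity. }
  split.
  - rewrite Hs by lia. rewrite E. reflexivity.
  - rewrite Hs by lia. rewrite E. unfold state_collect. simpl. reflexivity.
Qed.
End UnitIter.

(** * The network *)

Definition relu_layer (T : affine) (x : nat -> R) : nat -> R := fun i => relu (eval_affine T x i).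

Lemma eval_net_app Ls rest x : rest <> [] ->
  eval_net (Ls ++ rest) x = eval_net rest (fold_left (fun v T => relu_layer T v) Ls x).
Proof.
  revert x. induction Ls as [|T Ls IH]; intros x Hr; simpl. reflexivity.
  rewrite <- IH by auto. destruct (Ls ++ rest) eqn:E.
  - destruct Ls; destruct rest; simpl in E; try discriminate. congruence.
  - reflexivity.
Qed.

Section Net.
Variables N NS M C RR U : nat.
Hypothesis HN : (3 <= N)%nat.
Hypothesis HNS : (1 <= NS)%nat.
Hypothesis HM : (1 <= M)%nat.
Hypothesis HR : (1 <= RR)%nat.
Hypothesis HU : (2 * M + 2 * NS + 2 <= U)%nat.
Variable be : nat -> nat -> bool.
Variable wt : nat -> R.
Hypothesis Hwt : forall m, 0 <= wt m.

Definition col_width := (2 * N + 8)%nat.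

(* [C] columns of [col_width] neurons run side by side; column [c] evaluates
   units [c * RR], ..., [c * RR + RR - 1] in turn, [U] layers each, and the last
   two maps output [clamp 1] of the sum of the columns' accumulators. *)
Definition net_row (l i : nat) : row :=
  let c := (i / col_width)%nat in let o := (i mod col_width)%nat in
  let rho := (l / U)%nat in let lam := (l mod U)%nat in
  row_of N NS M (be (c * RR + rho)%nat) (wt (c * RR + rho)%nat) (kind_of M NS lam) o.

Definition layer_first := mkAffine 1 (C * col_width) (fun i j => fst (net_row 0 i) j) (fun i => snd (net_row 0 i)).
Definition layer_hidden (l : nat) := mkAffine (C * col_width) (C * col_width)
  (fun i j => if Nat.eqb (i / col_width) (j / col_width) then fst (net_row l i) (j mod col_width) else 0) (fun i => snd (net_row l i)).
Definition layer_clamp := mkAffine (C * col_width) 2 (fun i j => if Nat.eqb (j mod col_width) 1 then 1 else 0)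
  (fun i => if Nat.eqb i 0 then 0 else -1).
Definition layer_out := mkAffine 2 1 (fun i j => if Nat.eqb j 0 then 1 else -1) (fun _ => 0).

Definition n_hidden := (RR * U)%nat.
Definition net := layer_first :: map layer_hidden (seq 1 (n_hidden - 1)) ++ [layer_clamp; layer_out].

Fixpoint hidden_state (t : R) (l : nat) : nat -> R :=
  match l with O => relu_layer layer_first (fun _ => t) | S l' => relu_layer (layer_hidden (S l')) (hidden_state t l') end.

Lemma col_width_pos : (1 <= col_width)%nat. Proof. unfold col_width; lia. Qed.

Lemma divmod_col_width c o : (o < col_width)%nat -> ((c * col_width + o) / col_width = c /\ (c * col_width + o) mod col_width = o)%nat.
Proof. intros. pose proof col_width_pos. split.
  - rewrite Nat.div_add_l by lia. rewrite Nat.div_small by lia. lia.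
  - rewrite Nat.add_comm, Nat.Div0.mod_add. apply Nat.mod_small; lia. Qed.

Lemma layer_hidden_eval l x c o : (c < C)%nat -> (o < col_width)%nat ->
  eval_affine (layer_hidden l) x (c * col_width + o)%nat = dot col_width (fst (net_row l (c * col_width + o))) (fun o' => x (c * col_width + o')%nat) + snd (net_row l (c * col_width + o)).
Proof.
  intros Hc Ho. unfold eval_affine, layer_hidden. simpl a_in. simpl a_mat. simpl a_bias. f_equal.
  rewrite sumR_mul.
  rewrite (sumR_ext C _ (fun c' => if Nat.eqb c' c then dot col_width (fst (net_row l (c * col_width + o))) (fun o' => x (c * col_width + o')%nat) else 0)).
  - apply sumR_single; auto.
  - intros c' Hc'. destruct (divmod_col_width c o Ho) as [D1 D2].
    destruct (Nat.eqb_spec c' c).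
    + subst c'. unfold dot. apply sumR_ext. intros o' Ho'. destruct (divmod_col_width c o' Ho') as [E1 E2].
      rewrite D1, E1, Nat.eqb_refl, E2. reflexivity.
    + apply sumR_zero. intros o' Ho'. destruct (divmod_col_width c' o' Ho') as [E1 E2].
      rewrite D1, E1. destruct (Nat.eqb_spec c c'); [lia|]. ring.
Qed.

Lemma net_row_eq l c o : (o < col_width)%nat ->
  net_row l (c * col_width + o) = row_of N NS M (be (c * RR + l / U)%nat) (wt (c * RR + l / U)%nat) (kind_of M NS (l mod U)) o.
Proof. intros Ho. unfold net_row. destruct (divmod_col_width c o Ho) as [D1 D2]. rewrite D1, D2. reflexivity. Qed.

Definition col_acc (c rho : nat) (t : R) := sumR rho (fun r => wt (c * RR + r)%nat * bit_fn N NS M (be (c * RR + r)%nat) (relu t)).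

Lemma col_acc_nonneg c rho t : 0 <= col_acc c rho t.
Proof. unfold col_acc. apply sumR_nonneg. intros r _.
  pose proof (bit_fn_nonneg N NS M (be (c * RR + r)%nat) (relu t)).
  pose proof (Hwt (c * RR + r)%nat). nra. Qed.

Definition col_invariant (t : R) (l : nat) := forall c o, (c < C)%nat -> (o < col_width)%nat ->
  hidden_state t l (c * col_width + o)%nat = state_of N NS M (be (c * RR + l / U)%nat) (wt (c * RR + l / U)%nat) (relu t) (col_acc c (l / U) t) (kind_of M NS (l mod U)) o.

Lemma col_invariant0 t : col_invariant t 0.
Proof.
  intros c o Hc Ho. simpl hidden_state. unfold relu_layer, eval_affine, layer_first. simpl a_in; simpl a_mat; simpl a_bias.
  rewrite net_row_eq by auto. pose proof col_width_pos. rewrite Nat.div_small, Nat.mod_small by lia.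
  assert (HU0 : (0 < U)%nat) by lia.
  rewrite kind_fold by lia. unfold row_of, state_of, row_fold, state_fold. unfold col_acc. simpl sumR.
  destruct (Nat.eqb_spec o 0). { subst. unfold row_copy, single. simpl. f_equal. ring. }
  destruct (Nat.eqb_spec o 1). { subst. unfold row_copy, single. simpl. rewrite Rmult_0_l, !Rplus_0_l. apply relu_neg; lra. }
  destruct (Nat.eqb_spec o 2). { simpl. unfold row_zero, vzero, zigzag. simpl. rewrite Rmult_0_l, !Rplus_0_l. reflexivity. }
  destruct (Nat.eqb_spec o 3). { simpl. unfold row_zero, vzero, zigzag. simpl. rewrite Rmult_0_l, !Rplus_0_l, Ropp_0. reflexivity. }
  destruct (Nat.eqb_spec o 4). { simpl fst; simpl snd. unfold single. simpl. rewrite relu_shift by lra.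
    f_equal. ring. }
  destruct (Nat.eqb_spec o 5). { simpl fst; simpl snd. unfold single. simpl.
    assert (0 <= INR (seg_len N NS) - 1) by (assert (HK : (1 <= seg_len N NS)%nat) by (unfold seg_len; lia); apply (le_INR 1) in HK; simpl in HK; lra).
    replace (relu t - 0 * INR (seg_len N NS) - (INR (seg_len N NS) - 1)) with (relu t - (INR (seg_len N NS) - 1)) by ring.
    rewrite relu_shift by lra. f_equal. ring. }
  unfold row_zero, vzero. simpl. rewrite Rmult_0_l, Rplus_0_l. apply relu_neg; lra.
Qed.

Lemma col_acc_S c q t : col_acc c (S q) t = col_acc c q t + wt (c * RR + q)%nat * bit_fn N NS M (be (c * RR + q)%nat) (relu t).
Proof. reflexivity. Qed.

Lemma col_invariant_all t l : (l < n_hidden)%nat -> col_invariant t l.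
Proof.
  induction l as [|l IH]; intros Hl. apply col_invariant0.
  specialize (IH ltac:(lia)). intros c o Hc Ho.
  simpl hidden_state. unfold relu_layer. rewrite layer_hidden_eval by auto. rewrite net_row_eq by auto.
  assert (HU1 : (0 < U)%nat) by lia.
  set (q := (l / U)%nat). set (r := (l mod U)%nat).
  assert (Hl' : l = (U * q + r)%nat) by (unfold q, r; apply Nat.div_mod; lia).
  assert (Hr : (r < U)%nat) by (unfold r; apply Nat.mod_upper_bound; lia).
  assert (Hloc : state_is N NS M (be (c * RR + q)%nat) (wt (c * RR + q)%nat) (relu t) (col_acc c q t) (kind_of M NS r)
                  (fun o' => hidden_state t l (c * col_width + o')%nat)).
  { intros o' Ho'. unfold col_width in IH. apply IH; auto. }
  destruct (Nat.eq_dec (S r) U) as [E|E].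
  - assert (D1 : (S l / U = S q)%nat).
    { symmetry. apply (Nat.div_unique _ _ _ 0); lia. }
    assert (D2 : (S l mod U = 0)%nat).
    { symmetry. apply (Nat.mod_unique _ _ (S q)); lia. }
    rewrite D1, D2. rewrite kind_fold by lia.
    replace r with (U - 1)%nat in Hloc by lia.
    destruct (unit_last N NS M ltac:(lia) HNS HM _ _ (relu t) (col_acc c q t) U _ HU Hloc) as [S0 S1].
    pose proof (step_fold0 N NS M ltac:(lia) HNS HM (be (c * RR + S q)%nat) (wt (c * RR + S q)%nat) (relu t) (col_acc c (S q) t)
      (relu_ge0 t) (col_acc_nonneg c (S q) t) (fun o' => hidden_state t l (c * col_width + o')%nat) S0) as HF.
    assert (S1' : hidden_state t l (c * col_width + 1)%nat = col_acc c (S q) t) by (rewrite col_acc_S; exact S1).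
    specialize (HF S1' o Ho). unfold layer_step in HF. unfold col_width. rewrite <- HF. reflexivity.
  - assert (D1 : (S l / U = q)%nat).
    { symmetry. apply (Nat.div_unique _ _ _ (S r)); lia. }
    assert (D2 : (S l mod U = S r)%nat).
    { symmetry. apply (Nat.mod_unique _ _ q); lia. }
    rewrite D1, D2.
    pose proof (unit_step N NS M ltac:(lia) HNS HM _ _ (relu t) (col_acc c q t) (relu_ge0 t) (col_acc_nonneg c q t) (Hwt _) r _ Hloc) as HS.
    specialize (HS o Ho). unfold layer_step in HS. unfold col_width. rewrite <- HS. reflexivity.
Qed.

Lemma fold_hidden_state t n : fold_left (fun v T => relu_layer T v) (map layer_hidden (seq 1 n)) (hidden_state t 0) = hidden_state t n.
Proof.
  induction n. reflexivity.
  rewrite seq_S, map_app, fold_left_app, IHn. simpl. replace (1 + n)%nat with (S n) by lia. reflexivity.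
Qed.

Lemma n_hidden_pos : (1 <= n_hidden)%nat. Proof. unfold n_hidden. nia. Qed.

Lemma final_acc t c : (c < C)%nat -> hidden_state t (n_hidden - 1) (c * col_width + 1)%nat = col_acc c RR t.
Proof.
  intros Hc. pose proof (col_invariant_all t (n_hidden - 1) ltac:(pose proof n_hidden_pos; lia)) as HI.
  assert (D1 : ((n_hidden - 1) / U = RR - 1)%nat).
  { symmetry. apply (Nat.div_unique _ _ _ (U - 1)); unfold n_hidden; nia. }
  assert (D2 : ((n_hidden - 1) mod U = U - 1)%nat).
  { symmetry. apply (Nat.mod_unique _ _ (RR - 1)); unfold n_hidden; nia. }
  assert (Hloc : state_is N NS M (be (c * RR + (RR - 1))%nat) (wt (c * RR + (RR - 1))%nat) (relu t) (col_acc c (RR - 1) t) (kind_of M NS (U - 1))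
                  (fun o' => hidden_state t (n_hidden - 1) (c * col_width + o')%nat)).
  { intros o' Ho'. unfold col_width in HI. rewrite HI by (auto; unfold col_width; lia). rewrite D1, D2. reflexivity. }
  destruct (unit_last N NS M ltac:(lia) HNS HM _ _ (relu t) (col_acc c (RR - 1) t) U _ HU Hloc) as [S0 S1].
  rewrite S1. assert (E : col_acc c RR t = col_acc c (S (RR - 1)) t) by (f_equal; lia). rewrite E, col_acc_S. reflexivity.
Qed.

Lemma realize_net t : realize net t = clamp 1 (sumR C (fun c => col_acc c RR t)).
Proof.
  unfold realize, net. rewrite app_comm_cons. rewrite eval_net_app by discriminate.
  simpl fold_left. fold (hidden_state t 0). rewrite fold_hidden_state.
  simpl eval_net. unfold eval_affine at 1. simpl a_in. simpl a_mat. simpl a_bias.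
  unfold relu_layer. simpl sumR.
  assert (Hcl : forall i, eval_affine layer_clamp (hidden_state t (n_hidden - 1)) i = sumR C (fun c => col_acc c RR t) + (if Nat.eqb i 0 then 0 else -1)).
  { intros i. unfold eval_affine, layer_clamp. simpl a_in; simpl a_mat; simpl a_bias. f_equal.
    rewrite sumR_mul. apply sumR_ext. intros c Hc.
    rewrite (sumR_ext col_width _ (fun o => if Nat.eqb o 1 then hidden_state t (n_hidden - 1) (c * col_width + 1)%nat else 0)).
    - rewrite sumR_single by (unfold col_width; lia). apply final_acc; auto.
    - intros o Ho. destruct (divmod_col_width c o Ho) as [_ E]. rewrite E. destruct (Nat.eqb_spec o 1). subst; ring. ring. }
  rewrite !Hcl. simpl Nat.eqb. unfold clamp. cbv beta iota. set (tot := sumR C (fun c => col_acc c RR t)).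
  replace (tot + 0) with tot by ring. replace (tot + -1) with (tot - 1) by ring. ring.
Qed.

Lemma net_chain : chain_ok 1 net.
Proof.
  unfold net. simpl. split; auto.
  assert (G : forall n a, chain_ok (C * col_width) (map layer_hidden (seq a n) ++ [layer_clamp; layer_out])).
  { induction n; intros a. simpl. repeat split. simpl. split; auto. }
  apply G.
Qed.

Lemma net_hidden Wb : (C * col_width <= Wb)%nat -> (2 <= Wb)%nat -> hidden_le Wb net.
Proof.
  intros H1 H2. unfold net.
  assert (G : forall n a, hidden_le Wb (map layer_hidden (seq a n) ++ [layer_clamp; layer_out])).
  { induction n; intros a. simpl. repeat split; auto. simpl.
    destruct (map layer_hidden (seq (S a) n) ++ [layer_clamp; layer_out]) eqn:E.
    - destruct n; simpl in E; discriminate.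
    - split; [simpl; auto|]. rewrite <- E. apply IHn. }
  simpl. destruct (map layer_hidden (seq 1 (n_hidden - 1)) ++ [layer_clamp; layer_out]) eqn:E.
  - destruct (n_hidden - 1)%nat; simpl in E; discriminate.
  - split; [simpl; auto|]. rewrite <- E. apply G.
Qed.

Lemma net_length : length net = (n_hidden + 2)%nat.
Proof. unfold net. simpl. rewrite length_app, length_map, length_seq. simpl. pose proof n_hidden_pos. lia. Qed.

Lemma net_nonnil : net <> [].
Proof. unfold net. discriminate. Qed.
End Net.

(** * Parameters *)

Fixpoint floor_nat (D : nat) (y : R) : nat :=
  match D with O => O | S D' => if Rle_dec y (INR D') then floor_nat D' y else D' end.

Lemma floor_nat_spec D y : (1 <= D)%nat -> 0 <= y <= INR D ->
  (floor_nat D y < D)%nat /\ INR (floor_nat D y) <= y <= INR (floor_nat D y) + 1.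
Proof.
  induction D as [|D IH]; intros HD Hy. lia.
  simpl. destruct (Rle_dec y (INR D)) as [H|H].
  - destruct (Nat.eq_dec D 0) as [E|E].
    + subst D. simpl in *. split; [lia|]. lra.
    + destruct (IH ltac:(lia) ltac:(lra)) as [A B]. split; [lia|exact B].
  - rewrite S_INR in Hy. split; [lia|]. lra.
Qed.

Lemma sumR_testbit P : forall n, (n < 2 ^ P)%nat ->
  sumR P (fun m => 2 ^ m * b2R (Nat.testbit n m)) = INR n.
Proof.
  induction P as [|P IH]; intros n Hn.
  - simpl in Hn. assert (n = 0)%nat by lia. subst. simpl. reflexivity.
  - simpl sumR.
    assert (HP : (0 < 2 ^ P)%nat) by (apply Nat.neq_0_lt_0, Nat.pow_nonzero; lia).
    rewrite (sumR_ext P _ (fun m => 2 ^ m * b2R (Nat.testbit (n mod 2 ^ P) m))).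
    2:{ intros m Hm. rewrite Nat.mod_pow2_bits_low by auto. reflexivity. }
    rewrite IH by (apply Nat.mod_upper_bound; lia).
    assert (Hq : (n / 2 ^ P < 2)%nat) by (apply Nat.Div0.div_lt_upper_bound; simpl in Hn; lia).
    assert (Hb : b2R (Nat.testbit n P) = INR (n / 2 ^ P)).
    { rewrite Nat.testbit_eqb. destruct (Nat.lt_ge_cases (n / 2 ^ P) 1).
      - replace (n / 2 ^ P)%nat with 0%nat by lia. simpl. reflexivity.
      - replace (n / 2 ^ P)%nat with 1%nat by lia. simpl. reflexivity. }
    rewrite Hb. rewrite (Nat.div_mod n (2 ^ P)) at 3 by lia.
    rewrite plus_INR, mult_INR, pow_INR. replace (INR 2) with 2 by (simpl; ring). ring.
Qed.

Lemma log2_up_ge2 a : (3 <= a)%nat -> (2 <= Nat.log2_up a)%nat.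
Proof. intros H. destruct (Nat.log2_up_spec a ltac:(lia)) as [_ H2].
  destruct (Nat.le_gt_cases (Nat.log2_up a) 1) as [H3|H3]; [|lia].
  assert (2 ^ Nat.log2_up a <= 2 ^ 1)%nat by (apply Nat.pow_le_mono_r; lia). simpl in H0. lia. Qed.

Lemma le_pow_log2_up a : (1 <= a)%nat -> (a <= 2 ^ Nat.log2_up a)%nat.
Proof. intros H. destruct (Nat.eq_dec a 1). subst. simpl. lia. apply Nat.log2_up_spec. lia. Qed.

Lemma pow3_le_lip_bound L : (2 <= L)%nat -> 3 ^ (S L) <= 4 * 2 ^ (L * L) + 2 * INR (L * L).
Proof.
  intros HL. assert (0 <= INR (L * L)) by apply pos_INR.
  assert (A : 3 ^ L <= 4 ^ L) by (apply pow_incr; lra).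
  assert (B : 4 ^ L <= 2 ^ (L * L)).
  { replace 4 with (2 ^ 2) by (simpl; ring). rewrite <- pow_mult. apply Rle_pow; [lra|]. nia. }
  assert (0 <= 4 ^ L) by (apply pow_le; lra). change (3 ^ S L) with (3 * 3 ^ L). lra.
Qed.

(* Grids of side [2W] chained [L/2] times give segments of length at least
   [W^2 L], and [L] segments cover the [W^2 L^2] points.  [2 s lgW] columns of
   width [4W + 8] run [lgL] units of depth [4L] each, so the network has
   [2 s lgW lgL >= log2 ((WL)^(2s))] binary digits of precision. *)
Section Main.
Variables W L s : nat.
Variable xi : nat -> R.
Hypothesis HW : (6 <= W)%nat.
Hypothesis HL : (2 <= L)%nat.
Hypothesis Hxi : forall i, (i < W * W * (L * L))%nat -> 0 <= xi i <= 1.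

Definition lgW := Nat.log2_up (2 * W).
Definition lgL := Nat.log2_up (2 * L).
Definition n_cols := (2 * s * lgW)%nat.
Definition n_bits := (n_cols * lgL)%nat.
Definition grid := (2 * W)%nat.
Definition n_stages := (L / 2)%nat.
Definition unit_depth := (4 * L)%nat.
Definition quant (i : nat) := floor_nat (2 ^ n_bits) (xi i * 2 ^ n_bits).
Definition bit_of (m i : nat) := if Nat.ltb i (W * W * (L * L)) then Nat.testbit (quant i) m else false.
Definition bit_weight (m : nat) := 2 ^ m / 2 ^ n_bits.
Definition main_net := net grid n_stages L n_cols lgL unit_depth bit_of bit_weight.

Lemma lgW_ge2 : (2 <= lgW)%nat. Proof. unfold lgW. apply log2_up_ge2. lia. Qed.
Lemma lgL_ge2 : (2 <= lgL)%nat. Proof. unfold lgL. apply log2_up_ge2. lia. Qed.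
Lemma grid_ge3 : (3 <= grid)%nat. Proof. unfold grid. lia. Qed.
Lemma n_stages_ge1 : (1 <= n_stages)%nat. Proof. unfold n_stages. pose proof (Nat.div_mod L 2 ltac:(lia)). pose proof (Nat.mod_upper_bound L 2 ltac:(lia)). lia. Qed.
Lemma unit_depth_ok : (2 * L + 2 * n_stages + 2 <= unit_depth)%nat.
Proof. unfold n_stages, unit_depth. pose proof (Nat.div_mod L 2 ltac:(lia)). pose proof (Nat.mod_upper_bound L 2 ltac:(lia)). lia. Qed.
Lemma bit_weight_nonneg m : 0 <= bit_weight m.
Proof. unfold bit_weight. apply Rmult_le_pos. apply pow_le; lra. left. apply Rinv_0_lt_compat, pow_lt; lra. Qed.

Lemma enough_points : (W * W * (L * L) <= L * seg_len grid n_stages)%nat.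
Proof.
  unfold seg_len, block_len, grid, n_stages. set (h := (L / 2)%nat).
  assert (Hh : (L = 2 * h \/ L = 2 * h + 1)%nat) by (unfold h; pose proof (Nat.div_mod L 2 ltac:(lia)); pose proof (Nat.mod_upper_bound L 2 ltac:(lia)); lia).
  assert (h1 : (1 <= h)%nat) by lia.
  assert (K1 : (W * W * L <= h * (2 * W * (2 * W) - 1) + 1)%nat).
  { assert (E : (2 * W * (2 * W) - 1 = 4 * W * W - 1)%nat) by lia. rewrite E.
    assert (1 <= W * W)%nat by nia.
    destruct Hh as [E2|E2]; rewrite E2; nia. }
  assert (L * (W * W * L) <= L * (h * (2 * W * (2 * W) - 1) + 1))%nat by (apply Nat.mul_le_mono_l; exact K1).
  nia.
Qed.

Definition main_sum (t : R) := sumR n_bits (fun m => bit_weight m * bit_fn grid n_stages L (bit_of m) (relu t)).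

Lemma realize_main_net t : realize main_net t = clamp 1 (main_sum t).
Proof.
  unfold main_net. rewrite realize_net; try (apply grid_ge3 || apply n_stages_ge1 || lia || apply unit_depth_ok || apply bit_weight_nonneg).
  2: pose proof lgL_ge2; lia.
  f_equal. unfold main_sum, n_bits. rewrite sumR_mul. apply sumR_ext. intros c Hc. unfold col_acc. reflexivity.
Qed.

Lemma main_net_NN : NN (8 * s * (2 * W + 1) * Nat.log2_up (2 * W) + 2) (4 * L * Nat.log2_up (2 * L) + 1) (realize main_net).
Proof.
  exists main_net. unfold main_net. split; [apply net_nonnil|]. split; [apply net_chain|]. split.
  - apply net_hidden.
    + unfold n_cols, col_width, grid, lgW. nia.
    + pose proof lgW_ge2. unfold lgW in *. nia.
  - split.
    + rewrite net_length; try (apply grid_ge3 || apply n_stages_ge1 || lia || apply unit_depth_ok). 2: pose proof lgL_ge2; lia.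
      unfold n_hidden, unit_depth, lgL. lia.
    + intros; reflexivity.
Qed.

Lemma sumR_bit_weight : sumR n_bits bit_weight <= 1.
Proof.
  unfold bit_weight. rewrite (sumR_ext n_bits _ (fun m => / 2 ^ n_bits * 2 ^ m)) by (intros; unfold Rdiv; ring).
  rewrite sumR_scal, sumR_pow2. assert (0 < 2 ^ n_bits) by (apply pow_lt; lra).
  rewrite Rmult_minus_distr_l, Rinv_l by lra. assert (0 < / 2 ^ n_bits) by (apply Rinv_0_lt_compat; lra). lra.
Qed.

Lemma main_net_lip : lip_le (realize main_net) (4 * 2 ^ (L * L) + 2 * INR (L * L)).
Proof.
  intros x y. rewrite !realize_main_net.
  eapply Rle_trans; [apply clamp_lip; lra|].
  unfold main_sum. rewrite <- sumR_minus. eapply Rle_trans; [apply sumR_abs|].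
  eapply Rle_trans.
  - apply (sumR_le n_bits _ (fun m => bit_weight m * (3 ^ (S L) * Rabs (x - y)))).
    intros m Hm. rewrite <- Rmult_minus_distr_l, Rabs_mult, (Rabs_right (bit_weight m)) by (pose proof (bit_weight_nonneg m); lra).
    apply Rmult_le_compat_l; [apply bit_weight_nonneg|].
    apply bit_fn_lip; [pose proof grid_ge3; lia | apply n_stages_ge1 | lia].
  - rewrite (sumR_ext n_bits _ (fun m => (3 ^ S L * Rabs (x - y)) * bit_weight m)) by (intros; ring).
    rewrite sumR_scal. pose proof sumR_bit_weight. pose proof (pow3_le_lip_bound L HL).
    assert (0 <= 3 ^ S L * Rabs (x - y)) by (apply Rmult_le_pos; [apply pow_le; lra|apply Rabs_pos]).
    assert (0 <= Rabs (x - y)) by apply Rabs_pos.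
    assert (0 <= sumR n_bits bit_weight) by (apply sumR_nonneg; intros; apply bit_weight_nonneg).
    nra.
Qed.

Lemma main_net_range t : 0 <= realize main_net t <= 1.
Proof. rewrite realize_main_net. apply clamp_range. lra. Qed.

Lemma precision_nat : ((W * L) ^ (2 * s) <= 2 ^ n_bits)%nat.
Proof.
  pose proof lgW_ge2. pose proof lgL_ge2.
  assert (A : (W * L <= 2 ^ (lgW + lgL))%nat).
  { rewrite Nat.pow_add_r. apply Nat.mul_le_mono.
    - pose proof (le_pow_log2_up (2 * W) ltac:(lia)). unfold lgW. lia.
    - pose proof (le_pow_log2_up (2 * L) ltac:(lia)). unfold lgL. lia. }
  eapply Nat.le_trans. apply Nat.pow_le_mono_l. exact A.
  rewrite <- Nat.pow_mul_r. apply Nat.pow_le_mono_r. lia.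
  unfold n_bits, n_cols. nia.
Qed.

Lemma INR_pow2_n_bits : INR (2 ^ n_bits) = 2 ^ n_bits.
Proof. rewrite pow_INR. f_equal. Qed.

Lemma quant_approx i : (i < W * W * (L * L))%nat ->
  (quant i < 2 ^ n_bits)%nat /\ Rabs (/ 2 ^ n_bits * INR (quant i) - xi i) <= / 2 ^ n_bits.
Proof.
  intros Hi. assert (HP : 0 < 2 ^ n_bits) by (apply pow_lt; lra).
  destruct (Hxi i Hi) as [X1 X2].
  assert (H1 : (1 <= 2 ^ n_bits)%nat) by (apply Nat.neq_0_lt_0, Nat.pow_nonzero; lia).
  destruct (floor_nat_spec (2 ^ n_bits) (xi i * 2 ^ n_bits) H1) as [A1 A2];
    [rewrite INR_pow2_n_bits; split; nra|].
  fold (quant i) in A1, A2. split; [exact A1|].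
  replace (/ 2 ^ n_bits * INR (quant i) - xi i) with (/ 2 ^ n_bits * (INR (quant i) - xi i * 2 ^ n_bits))
    by (field; lra).
  rewrite Rabs_mult, Rabs_right by (left; apply Rinv_0_lt_compat; lra).
  rewrite <- (Rmult_1_r (/ 2 ^ n_bits)) at 2. apply Rmult_le_compat_l; [left; apply Rinv_0_lt_compat; lra|].
  unfold Rabs; destruct Rcase_abs; lra.
Qed.

Lemma main_sum_nat i : (i < W * W * (L * L))%nat -> main_sum (INR i) = / 2 ^ n_bits * INR (quant i).
Proof.
  intros Hi. unfold main_sum. rewrite relu_pos by apply pos_INR.
  rewrite (sumR_ext n_bits _ (fun m => / 2 ^ n_bits * (2 ^ m * b2R (Nat.testbit (quant i) m)))).
  - rewrite sumR_scal, sumR_testbit by apply quant_approx, Hi. reflexivity.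
  - intros m Hm. rewrite bit_fn_nat; [| pose proof grid_ge3; lia | apply n_stages_ge1 | lia |].
    + unfold bit_of. destruct (Nat.ltb_spec i (W * W * (L * L))); [|lia]. unfold bit_weight, Rdiv. ring.
    + pose proof enough_points. lia.
Qed.

Lemma main_net_fits i : (i < W * W * (L * L))%nat ->
  Rabs (realize main_net (INR i) - xi i) <= / (INR (W * L)) ^ (2 * s).
Proof.
  intros Hi. destruct (quant_approx i Hi) as [Hq Herr].
  assert (HP : 0 < 2 ^ n_bits) by (apply pow_lt; lra).
  assert (Hq' : INR (quant i) + 1 <= 2 ^ n_bits) by (rewrite <- INR_pow2_n_bits; apply INR_lt_S; exact Hq).
  rewrite realize_main_net, main_sum_nat by exact Hi. rewrite clamp_mid.
  2:{ pose proof (pos_INR (quant i)). split; [apply Rmult_le_pos; [left; apply Rinv_0_lt_compat|]; lra|].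
      apply (Rmult_le_reg_l (2 ^ n_bits)); auto. rewrite <- Rmult_assoc, Rinv_r by lra. lra. }
  eapply Rle_trans; [exact Herr|]. apply Rinv_le_contravar.
  - apply pow_lt. rewrite mult_INR. apply Rmult_lt_0_compat; apply lt_0_INR; lia.
  - rewrite <- pow_INR, <- INR_pow2_n_bits. apply le_INR. apply precision_nat.
Qed.
End Main.

Theorem proposition31 (W L s : nat) (xi : nat -> R) :
  (6 <= W)%nat -> (2 <= L)%nat ->
  (forall i, (i < W * W * (L * L))%nat -> 0 <= xi i <= 1) ->
  exists phi : R -> R,
    NN (8 * s * (2 * W + 1) * Nat.log2_up (2 * W) + 2)
       (4 * L * Nat.log2_up (2 * L) + 1) phi /\
    lip_le phi (4 * 2 ^ (L * L) + 2 * INR (L * L)) /\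
    (forall i, (i < W * W * (L * L))%nat ->
       Rabs (phi (INR i) - xi i) <= / (INR (W * L)) ^ (2 * s)) /\
    (forall t, 0 <= phi t <= 1).
Proof.
  intros HW HL Hxi. exists (realize (main_net W L s xi)).
  split; [|split; [|split]].
  - exact (main_net_NN W L s xi HW HL).
  - exact (main_net_lip W L s xi HW HL).
  - exact (main_net_fits W L s xi HW HL Hxi).
  - exact (main_net_range W L s xi HW HL).
Qed.
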